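(* Let $\tau>0$ and consider the system \[ \begin{cases} x'(t)=s-dx(t)-kx(t)v(t),\\ y'(t)=k\mathrm{e}^{-\delta\tau}x(t-\tau)v(t-\tau)-\delta y(t)-py(t)z(t),\\ v'(t)=N\delta y(t)-\mu v(t),\\ z'(t)=qy(t)z(t)-bz(t), \end{cases} \] with initial conditions $x(\theta)=\varphi_{1}(\theta)$, $v(\theta)=\varphi_{3}(\theta)$ for $\theta\in[-\tau,0]$, $y(0)=y_{0}\ge 0$, $z(0)=z_{0}\ge0$, where $\varphi_{1},\varphi_3\in C([-\tau,0],\mathbb{R}_{+})$. Let \[ \overline{R}_{0}=\frac{s}{d\frac{\mu}{k\mathrm{e}^{-\delta\tau}N}},\qquad \overline{R}_{1}=\frac{s}{d\frac{\mu}{k\mathrm{e}^{-\delta\tau}N}+\mathrm{e}^{\delta\tau}\delta\frac{b}{q}}, \] let $E_0=(s/d,0,0,0)$, let $\overline{E}_1=\left(\frac{\mu\mathrm{e}^{\delta\tau}}{kN},\ \frac{\mathrm{e}^{-\delta\tau}}{\delta}\big(s-\frac{d\mu\mathrm{e}^{\delta\tau}}{kN}\big),\ \frac{N\mathrm{e}^{-\delta\tau}}{\mu}\big(s-\frac{d\mu\mathrm{e}^{\delta\tau}}{kN}\big),\ 0\right)$ (the equilibrium with positive $x,y,v$ and $z=0$, existing when $\overline R_0>1$), and let $\overline{E}_2=\left(\bar x_2,\ \frac{b}{q},\ \frac{N\delta b}{\mu q},\ \frac{\delta}{p}\big(\frac{k\mathrm{e}^{-\delta\tau}N\bar x_2}{\mu}-1\big)\right)$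 with $\bar x_2=\frac{s}{d+kN\delta b/(\mu q)}$ (the equilibrium with all components positive, existing when $\overline R_1>1$). Then: (i) If $\overline{R}_{0}\leq1$, then $E_{0}$ is globally asymptotically stable. (ii) If $\overline{R}_{1}\leq1<\overline{R}_{0}$, then $\overline{E}_{1}$ is globally asymptotically stable with respect to solutions whose initial data satisfy $y_{0}+\varphi_{1}(-\tau)\varphi_{3}(-\tau)>0$ or $\varphi_{3}(0)>0$. (iii) If $\overline{R}_{1}>1$, then $\overline{E}_{2}$ is globally asymptotically stable with respect to solutions whose initial data satisfy $z_{0}>0$ and either $y_{0}+\varphi_{1}(-\tau)\varphi_{3}(-\tau)>0$ or $\varphi_{3}(0)>0$.
   Context: All parameters $s,d,k,\delta,p,N,\mu,q,b$ are positive constants. Globally asymptotically stable means: the equilibrium is (Lyapunov) stable and every solution with admissible initial data converges to it as $t\to\infty$. *)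

From Stdlib Require Import Reals.
From Coquelicot Require Import Coquelicot.
Open Scope R_scope.

(* phi restricted to [-tau,0] is continuous (phi ∈ C([-tau,0], R)):
   the clamped function phi (clamp u) is continuous everywhere. *)
Definition cont_on_init (tau : R) (phi : R -> R) : Prop :=
  forall u : R, continuous (fun w => phi (Rmax (- tau) (Rmin 0 w))) u.

Definition admissible (tau : R) (phi1 phi3 : R -> R) (y0 z0 : R) : Prop :=
  cont_on_init tau phi1 /\ cont_on_init tau phi3 /\
  (forall th, - tau <= th <= 0 -> 0 <= phi1 th /\ 0 <= phi3 th) /\
  0 <= y0 /\ 0 <= z0.

Definition is_solution (s d k dl p N mu q b tau : R)
    (phi1 phi3 : R -> R) (y0 z0 : R) (x y v z : R -> R) : Prop :=
  (forall th, - tau <= th <= 0 -> x th = phi1 th /\ v th = phi3 th) /\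
  y 0 = y0 /\ z 0 = z0 /\
  (forall t, 0 <= t ->
     continuous (fun w => x (Rmax 0 w)) t /\ continuous (fun w => y (Rmax 0 w)) t /\
     continuous (fun w => v (Rmax 0 w)) t /\ continuous (fun w => z (Rmax 0 w)) t) /\
  (forall t, 0 < t ->
     is_derive x t (s - d * x t - k * x t * v t) /\
     is_derive y t (k * exp (- (dl * tau)) * x (t - tau) * v (t - tau)
                    - dl * y t - p * y t * z t) /\
     is_derive v t (N * dl * y t - mu * v t) /\
     is_derive z t (q * y t * z t - b * z t)).

Definition GAS_wrt (s d k dl p N mu q b tau : R)
    (P : (R -> R) -> (R -> R) -> R -> R -> Prop) (e1 e2 e3 e4 : R) : Prop :=
  (forall eps, 0 < eps -> exists eta, 0 < eta /\
     forall phi1 phi3 y0 z0 x y v z,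
       admissible tau phi1 phi3 y0 z0 -> P phi1 phi3 y0 z0 ->
       (forall th, - tau <= th <= 0 ->
          Rabs (phi1 th - e1) < eta /\ Rabs (phi3 th - e3) < eta) ->
       Rabs (y0 - e2) < eta -> Rabs (z0 - e4) < eta ->
       is_solution s d k dl p N mu q b tau phi1 phi3 y0 z0 x y v z ->
       forall t, 0 <= t ->
         Rabs (x t - e1) < eps /\ Rabs (y t - e2) < eps /\
         Rabs (v t - e3) < eps /\ Rabs (z t - e4) < eps) /\
  (forall phi1 phi3 y0 z0 x y v z,
     admissible tau phi1 phi3 y0 z0 -> P phi1 phi3 y0 z0 ->
     is_solution s d k dl p N mu q b tau phi1 phi3 y0 z0 x y v z ->
     is_lim x p_infty e1 /\ is_lim y p_infty e2 /\
     is_lim v p_infty e3 /\ is_lim z p_infty e4).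

Definition R0bar (s d k dl N mu tau : R) : R :=
  s / (d * (mu / (k * exp (- (dl * tau)) * N))).

Definition R1bar (s d k dl N mu q b tau : R) : R :=
  s / (d * (mu / (k * exp (- (dl * tau)) * N)) + exp (dl * tau) * dl * (b / q)).

Definition x2bar (s d k dl N mu q b : R) : R :=
  s / (d + k * N * dl * b / (mu * q)).

Definition cond_ii (tau : R) (phi1 phi3 : R -> R) (y0 z0 : R) : Prop :=
  y0 + phi1 (- tau) * phi3 (- tau) > 0 \/ phi3 0 > 0.

Definition cond_iii (tau : R) (phi1 phi3 : R -> R) (y0 z0 : R) : Prop :=
  z0 > 0 /\ (y0 + phi1 (- tau) * phi3 (- tau) > 0 \/ phi3 0 > 0).

(* Each equilibrium (xs, ys, vs, zs) is handled by one Lyapunov functional of Volterra type,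
     V = g(xs, x) + e^(dl tau) g(ys, y) + c_v g(vs, v) + c_z g(zs, z) + k int_(t-tau)^t g(xs vs, x v),
   with g(a, u) = u - a - a ln (u / a) >= 0.  Along solutions
     V' <= - d (x - xs)^2 / x + e^(dl tau) p (ys - b/q) z <= 0,
   the logarithms cancelling through ln r <= r - 1 applied to three ratios whose product is
   the quotient of the delayed and the current value of x v.  As g(a, u) controls |u - a|,
   V being nonincreasing gives stability.  It also bounds the solution, hence its derivatives,
   so Barbalat's lemma gives x -> xs, and then v, y and z converge in turn through the
   equations.  Positivity of solutions (method of steps) and the conditions on the initial
   data keep the state in the domain of g. *)

From Stdlib Require Import Reals Lra Psatz Classical.
From Coquelicot Require Import Coquelicot.
Open Scope R_scope.

(** * Calculus on the real line *)

(* Coquelicot states its rules over abstract normed modules; these real instances are the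
   form that [apply] unifies with. *)
Lemma is_derive_Rext (f g : R -> R) (t l : R) : (forall x, f x = g x) ->
  is_derive f t l -> is_derive g t l.
Proof. intros H. apply is_derive_ext. exact H. Qed.

Lemma continuous_Rext (f g : R -> R) (t : R) : (forall x, f x = g x) ->
  continuous f t -> continuous g t.
Proof. intros H. apply continuous_ext. exact H. Qed.

Lemma is_derive_Rplus (f g : R -> R) (t a b : R) : is_derive f t a -> is_derive g t b ->
  is_derive (fun x => f x + g x) t (a + b).
Proof. intros Hf Hg. exact (is_derive_plus f g t a b Hf Hg). Qed.

Lemma is_derive_Rminus (f g : R -> R) (t a b : R) : is_derive f t a -> is_derive g t b ->
  is_derive (fun x => f x - g x) t (a - b).
Proof. intros Hf Hg. exact (is_derive_minus f g t a b Hf Hg). Qed.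

Lemma is_derive_Rmult (f g : R -> R) (t a b : R) : is_derive f t a -> is_derive g t b ->
  is_derive (fun x => f x * g x) t (a * g t + f t * b).
Proof. intros Hf Hg. apply (is_derive_mult f g t a b Hf Hg). intros; apply Rmult_comm. Qed.

Lemma is_derive_Rscal (f : R -> R) (c t a : R) : is_derive f t a ->
  is_derive (fun x => c * f x) t (c * a).
Proof. intros Hf. exact (is_derive_scal f t c a Hf). Qed.

Lemma is_derive_Rconst (c t : R) : is_derive (fun _ : R => c) t 0.
Proof. exact (is_derive_const (K := R_AbsRing) (V := R_NormedModule) c t). Qed.

Lemma is_derive_Rid (t : R) : is_derive (fun x : R => x) t 1.
Proof. exact (is_derive_id (K := R_AbsRing) t). Qed.

Lemma is_derive_exp_comp (f : R -> R) (t a : R) : is_derive f t a ->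
  is_derive (fun x => exp (f x)) t (a * exp (f t)).
Proof. intros Hf. apply (is_derive_comp exp f t (exp (f t)) a); auto. apply is_derive_exp. Qed.

Lemma is_derive_ln_comp (f : R -> R) (t a : R) : 0 < f t -> is_derive f t a ->
  is_derive (fun x => ln (f x)) t (a / f t).
Proof.
  intros Hp Hf. change (a / f t) with (scal a (/ f t)).
  apply (is_derive_comp ln f t (/ f t) a); auto.
  apply is_derive_Reals. apply derivable_pt_lim_ln. auto.
Qed.

Lemma is_derive_shift (f : R -> R) (c t a : R) : is_derive f (t - c) a ->
  is_derive (fun x => f (x - c)) t a.
Proof.
  intros Hf. replace a with (scal 1 a) by apply (scal_one (K := R_Ring) (V := R_ModuleSpace)).
  apply (is_derive_comp f (fun x => x - c) t a 1); auto.
  replace 1 with (1 - 0) by ring. apply is_derive_Rminus. apply is_derive_Rid. apply is_derive_Rconst.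
Qed.

Lemma is_derive_val (f : R -> R) (t a b : R) : is_derive f t a -> a = b -> is_derive f t b.
Proof. intros H <-; auto. Qed.

Lemma is_derive_sqr_dist (u : R -> R) (c t a : R) : is_derive u t a ->
  is_derive (fun x => (u x - c) ^ 2) t (2 * (u t - c) * a).
Proof.
  intros H. apply (is_derive_Rext (fun x => (u x - c) * (u x - c))); [intros; ring|].
  eapply is_derive_val; [apply is_derive_Rmult; apply is_derive_Rminus; eauto; apply is_derive_Rconst|].
  cbv beta. ring.
Qed.

Lemma is_derive_continuous (f : R -> R) (t l : R) : is_derive f t l -> continuous f t.
Proof.
  intros H. apply (ex_derive_continuous (K := R_AbsRing) (V := R_NormedModule)). exists l. auto.
Qed.

Lemma continuous_Rmult (f g : R -> R) (t : R) : continuous f t -> continuous g t ->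
  continuous (fun x => f x * g x) t.
Proof. intros. apply (continuous_mult (U := R_UniformSpace) (K := R_AbsRing) f g t); auto. Qed.

Lemma continuous_Rplus (f g : R -> R) (t : R) : continuous f t -> continuous g t ->
  continuous (fun x => f x + g x) t.
Proof.
  intros. apply (continuous_plus (U := R_UniformSpace) (K := R_AbsRing) (V := R_NormedModule) f g t); auto.
Qed.

Lemma continuous_Rconst (c t : R) : continuous (fun _ : R => c) t.
Proof. apply (continuous_const (U := R_UniformSpace) (V := R_UniformSpace)). Qed.

Lemma continuous_Rscal (f : R -> R) (c t : R) : continuous f t -> continuous (fun x => c * f x) t.
Proof. intros. apply continuous_Rmult; auto. apply continuous_Rconst. Qed.

Lemma continuous_Rminus (f g : R -> R) (t : R) : continuous f t -> continuous g t ->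
  continuous (fun x => f x - g x) t.
Proof.
  intros. apply (continuous_Rext (fun x => f x + (-1) * g x)); [intros; ring|].
  apply continuous_Rplus; auto. apply continuous_Rscal; auto.
Qed.

Lemma continuous_exp_comp (f : R -> R) (t : R) : continuous f t -> continuous (fun x => exp (f x)) t.
Proof.
  intros H. apply (continuous_comp f exp t H).
  apply is_derive_continuous with (exp (f t)). apply is_derive_exp.
Qed.

Lemma continuous_ln_comp (f : R -> R) (t : R) : 0 < f t -> continuous f t ->
  continuous (fun x => ln (f x)) t.
Proof.
  intros Hp H. apply (continuous_comp f ln t H). apply is_derive_continuous with (/ f t).
  apply is_derive_Reals. apply derivable_pt_lim_ln. auto.
Qed.

Lemma continuous_Rmax_l (a t : R) : continuous (fun w => Rmax a w) t.
Proof.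
  apply (continuous_Rext (fun w => / 2 * (a + w + Rabs (a - w)))).
  { intros w. unfold Rmax. destruct (Rle_dec a w).
    - rewrite Rabs_left1 by lra. field.
    - rewrite Rabs_right by lra. field. }
  apply continuous_Rscal. apply continuous_Rplus. apply continuous_Rplus.
  - apply continuous_Rconst.
  - apply (continuous_id (U := R_UniformSpace)).
  - apply (continuous_Rabs_comp (fun w => a - w)). apply continuous_Rminus.
    apply continuous_Rconst. apply (continuous_id (U := R_UniformSpace)).
Qed.

Lemma continuous_eps_delta (f : R -> R) (x : R) : continuous f x ->
  forall eps, 0 < eps -> exists del, 0 < del /\
    forall y, Rabs (y - x) < del -> Rabs (f y - f x) < eps.
Proof.
  intros H eps He. apply continuity_pt_filterlim in H.
  destruct (H eps He) as [del [Hd Hd']]. exists del. split; auto.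
  intros y Hy. destruct (Req_dec y x) as [->|Hne].
  - unfold Rminus. rewrite Rplus_opp_r, Rabs_R0. auto.
  - apply Hd'. split. split. constructor. auto. simpl; unfold R_dist; auto.
Qed.

Ltac Rpos :=
  first [ lra | apply Rmult_lt_0_compat; Rpos | apply Rdiv_lt_0_compat; Rpos | apply Rinv_0_lt_compat; Rpos ].

Ltac Rmin_le :=
  first [ apply Rle_refl | eapply Rle_trans; [apply Rmin_l | Rmin_le] | eapply Rle_trans; [apply Rmin_r | Rmin_le] ].

Lemma MVT_open (f df : R -> R) (a b : R) :
  a < b -> (forall x, a < x < b -> is_derive f x (df x)) ->
  (forall x, a <= x <= b -> continuous f x) ->
  exists c, a < c < b /\ f b - f a = df c * (b - a).
Proof.
  intros Hab Hd Hc.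
  assert (pr1 : forall c, a < c < b -> derivable_pt f c).
  { intros c Hc'. exists (df c). apply is_derive_Reals. auto. }
  assert (pr2 : forall c, a < c < b -> derivable_pt id c) by (intros; apply derivable_pt_id).
  destruct (MVT f id a b pr1 pr2 Hab) as [c [P HP]].
  - intros c Hc'. apply continuity_pt_filterlim. apply Hc. auto.
  - intros c _. apply derivable_continuous_pt. apply derivable_pt_id.
  - exists c. split; auto.
    rewrite (derive_pt_eq_0 f c (df c) (pr1 c P)) in HP by (apply is_derive_Reals; auto).
    rewrite (derive_pt_eq_0 id c 1 (pr2 c P)) in HP by apply derivable_pt_lim_id.
    unfold id in HP. lra.
Qed.

Lemma is_derive_nonpos_le (f df : R -> R) (a b : R) :
  a <= b -> (forall x, a < x < b -> is_derive f x (df x)) ->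
  (forall x, a < x < b -> df x <= 0) ->
  (forall x, a <= x <= b -> continuous f x) -> f b <= f a.
Proof.
  intros Hab Hd Hn Hc. destruct (Req_dec a b) as [->|Hne]; [lra|].
  destruct (MVT_open f df a b) as [c [Hc1 Hc2]]; auto; try lra.
  specialize (Hn c Hc1). nra.
Qed.

Lemma ball_R_between (x y : R) (e : posreal) : ball x e y -> x - e < y < x + e.
Proof.
  unfold ball; simpl; unfold AbsRing_ball, abs, minus, plus, opp; simpl.
  intros H. apply Rabs_lt_between in H. lra.
Qed.

Definition clamp (a : R) (f : R -> R) (u : R) : R := f (Rmax a u).

Lemma continuous_clamp (f : R -> R) (a : R) :
  (forall t, a <= t -> continuous (clamp a f) t) -> forall t, continuous (clamp a f) t.
Proof.
  intros H t. destruct (Rle_lt_dec a t) as [h|h]; auto.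
  apply continuous_ext_loc with (fun _ => f a); [|apply continuous_Rconst].
  assert (Hp : 0 < a - t) by lra.
  exists (mkposreal _ Hp). intros y Hy. apply ball_R_between in Hy; simpl in Hy.
  unfold clamp. rewrite Rmax_left; auto. lra.
Qed.

Lemma clamp_right (a : R) (f : R -> R) (u : R) : a <= u -> clamp a f u = f u.
Proof. intros H. unfold clamp. rewrite Rmax_right; auto. Qed.

Lemma is_derive_clamp (f : R -> R) (a t l : R) : a < t -> is_derive f t l -> is_derive (clamp a f) t l.
Proof.
  intros Ht Hd. apply is_derive_ext_loc with f; auto.
  assert (Hp : 0 < t - a) by lra.
  exists (mkposreal _ Hp). intros y Hy. apply ball_R_between in Hy; simpl in Hy.
  rewrite clamp_right; auto. lra.
Qed.

Lemma continuous_clamp_clamp (f : R -> R) (a b : R) : a <= b ->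
  (forall t, continuous (clamp a f) t) -> forall t, continuous (clamp b f) t.
Proof.
  intros Hab H t. apply (continuous_Rext (fun w => clamp a f (Rmax b w))).
  - intros w. unfold clamp. f_equal. apply Rmax_right. apply Rle_trans with b; [auto | apply Rmax_l].
  - apply (continuous_comp (fun w => Rmax b w) (clamp a f)). apply continuous_Rmax_l. apply H.
Qed.

Lemma is_derive_RInt_continuous (G : R -> R) (a t : R) : (forall u, continuous G u) ->
  is_derive (fun w => RInt G a w) t (G t).
Proof.
  intros HG. apply is_derive_RInt with (f := G) (a := a); auto.
  apply filter_forall. intros b0. apply (RInt_correct (V := R_CompleteNormedModule)).
  apply (ex_RInt_continuous (V := R_CompleteNormedModule)). intros; auto.
Qed.

(* Integrating factor: [u exp (int_a^t h)] has derivative [g exp (int_a^t h)]. *)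
Lemma linear_ode_sign (u g h : R -> R) (a b : R) :
  a < b ->
  (forall t, continuous (clamp a h) t) -> (forall t, continuous (clamp a u) t) ->
  (forall t, a < t < b -> is_derive u t (g t - h t * u t)) ->
  (forall t, a < t < b -> 0 <= g t) ->
  (0 <= u a -> 0 <= u b) /\ (0 < u a -> 0 < u b) /\
  ((forall t, a < t < b -> 0 < g t) -> 0 <= u a -> 0 < u b).
Proof.
  intros Hab Hh Hu Hd Hg.
  set (hc := clamp a h).
  set (F := fun w => clamp a u w * exp (RInt hc a w)).
  assert (HF : forall t, a < t < b -> is_derive F t (g t * exp (RInt hc a t))).
  { intros t Ht. unfold F. eapply is_derive_val.
    - apply is_derive_Rmult. apply is_derive_clamp, Hd; lra.
      apply is_derive_exp_comp, is_derive_RInt_continuous; auto.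
    - cbv beta. unfold hc. rewrite !clamp_right by lra. ring. }
  assert (HFc : forall t, a <= t <= b -> continuous F t).
  { intros t Ht. apply continuous_Rmult; auto. apply continuous_exp_comp.
    apply is_derive_continuous with (hc t). apply is_derive_RInt_continuous. auto. }
  assert (Fa : F a = u a).
  { unfold F. rewrite RInt_point, clamp_right by lra. change (u a * exp 0 = u a). rewrite exp_0. ring. }
  assert (Fb : F b = u b * exp (RInt hc a b)) by (unfold F; rewrite clamp_right by lra; auto).
  destruct (MVT_open F (fun t => g t * exp (RInt hc a t)) a b Hab HF HFc) as [c [Hc1 Hc2]].
  rewrite Fa, Fb in Hc2.
  assert (Eb := exp_pos (RInt hc a b)). assert (Ec := exp_pos (RInt hc a c)).
  assert (Hgc : 0 <= g c * exp (RInt hc a c) * (b - a)).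
  { apply Rmult_le_pos; [apply Rmult_le_pos|]; try lra. apply Hg; auto. }
  repeat split; intros Hua.
  - assert (0 <= u b * exp (RInt hc a b)) by lra. nra.
  - assert (0 < u b * exp (RInt hc a b)) by lra. nra.
  - intros Hu0. assert (0 < g c * exp (RInt hc a c) * (b - a)).
    { apply Rmult_lt_0_compat; [apply Rmult_lt_0_compat|]; try lra. apply Hua; auto. }
    assert (0 < u b * exp (RInt hc a b)) by lra. nra.
Qed.

Lemma is_lim_p_infty_iff (f : R -> R) (l : R) :
  is_lim f p_infty l <-> forall eps, 0 < eps -> exists M, forall t, M < t -> Rabs (f t - l) < eps.
Proof.
  rewrite <- is_lim_spec. split.
  - intros H eps He. exact (H (mkposreal eps He)).
  - intros H eps. exact (H eps (cond_pos eps)).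
Qed.

Lemma is_lim_Rmult (f g : R -> R) (a b : R) : is_lim f p_infty a -> is_lim g p_infty b ->
  is_lim (fun t => f t * g t) p_infty (a * b).
Proof. intros. apply (is_lim_mult f g p_infty a b); auto. simpl; auto. Qed.

Lemma is_lim_Rdiv (f g : R -> R) (a b : R) : is_lim f p_infty a -> is_lim g p_infty b -> b <> 0 ->
  is_lim (fun t => f t / g t) p_infty (a / b).
Proof. intros. apply (is_lim_div f g p_infty a b); auto. intros H'; injection H'; auto. simpl; auto. Qed.

Lemma is_lim_shift (f : R -> R) (c l : R) :
  is_lim f p_infty l -> is_lim (fun t => f (t - c)) p_infty l.
Proof.
  rewrite !is_lim_p_infty_iff. intros Hf eps He. destruct (Hf eps He) as [M HM].
  exists (M + c). intros t Ht. apply HM. lra.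
Qed.

Lemma is_lim_of_sqr_dist (f : R -> R) (a : R) :
  is_lim (fun t => (f t - a) ^ 2) p_infty 0 -> is_lim f p_infty a.
Proof.
  rewrite !is_lim_p_infty_iff. intros H eps He.
  destruct (H (eps * eps)) as [M HM]; [nra|].
  exists M. intros t Ht. specialize (HM t Ht).
  rewrite Rminus_0_r, Rabs_right in HM by (apply Rle_ge, pow2_ge_0).
  destruct (Rlt_le_dec (Rabs (f t - a)) eps) as [h|h]; auto. exfalso.
  assert (Rabs (f t - a) * Rabs (f t - a) = (f t - a) ^ 2)
    by (rewrite <- Rabs_mult, Rabs_right; [ring | apply Rle_ge, Rle_0_sqr]).
  nra.
Qed.

Definition bounded_from (t0 : R) (f : R -> R) : Prop :=
  exists M, forall t, t0 <= t -> Rabs (f t) <= M.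

Lemma bounded_from_const (t0 c : R) : bounded_from t0 (fun _ => c).
Proof. exists (Rabs c). intros; lra. Qed.

Lemma bounded_from_plus (t0 : R) (f g : R -> R) : bounded_from t0 f -> bounded_from t0 g ->
  bounded_from t0 (fun t => f t + g t).
Proof.
  intros [A HA] [B HB]. exists (A + B). intros t Ht.
  eapply Rle_trans. apply Rabs_triang. specialize (HA t Ht). specialize (HB t Ht). lra.
Qed.

Lemma bounded_from_minus (t0 : R) (f g : R -> R) : bounded_from t0 f -> bounded_from t0 g ->
  bounded_from t0 (fun t => f t - g t).
Proof.
  intros [A HA] [B HB]. exists (A + B). intros t Ht.
  eapply Rle_trans. apply Rabs_triang. rewrite Rabs_Ropp. specialize (HA t Ht). specialize (HB t Ht). lra.
Qed.

Lemma bounded_from_mult (t0 : R) (f g : R -> R) : bounded_from t0 f -> bounded_from t0 g ->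
  bounded_from t0 (fun t => f t * g t).
Proof.
  intros [A HA] [B HB]. exists (A * B). intros t Ht. rewrite Rabs_mult.
  apply Rmult_le_compat; auto; apply Rabs_pos.
Qed.

Lemma bounded_from_shift (t0 c : R) (f : R -> R) : bounded_from t0 f ->
  bounded_from (t0 + c) (fun t => f (t - c)).
Proof. intros [A HA]. exists A. intros t Ht. apply HA. lra. Qed.

Lemma bounded_from_mono (t0 t1 : R) (f : R -> R) : t0 <= t1 -> bounded_from t0 f -> bounded_from t1 f.
Proof. intros H [A HA]. exists A. intros t Ht. apply HA. lra. Qed.

(* [bounded_from_minus] comes before [bounded_from_plus] since [f t - g t] unfolds to a sum. *)
Ltac prove_bounded :=
  repeat first [ assumption | apply bounded_from_const | apply bounded_from_minus
               | apply bounded_from_plus | apply bounded_from_mult ].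

Ltac prove_lim :=
  repeat first [ assumption | apply is_lim_const | apply is_lim_minus' | apply is_lim_plus'
               | apply is_lim_Rmult | apply is_lim_shift ].

Lemma lipschitz_of_bounded_derive (f df : R -> R) (t0 : R) :
  (forall t, t0 < t -> is_derive f t (df t)) -> bounded_from t0 df ->
  exists L, 0 < L /\ forall t u, t0 < t -> t0 < u -> Rabs (f t - f u) <= L * Rabs (t - u).
Proof.
  intros Hd [B Hb]. exists (Rabs B + 1). split; [apply Rle_lt_0_plus_1, Rabs_pos|].
  assert (K : forall t u, t0 < t -> t < u -> Rabs (f t - f u) <= (Rabs B + 1) * Rabs (t - u)).
  { intros t u Ht Htu. destruct (MVT_open f df t u Htu) as [c [Hc1 Hc2]].
    - intros x Hx. apply Hd. lra.
    - intros x Hx. apply is_derive_continuous with (df x). apply Hd. lra.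
    - rewrite Rabs_minus_sym, Hc2, Rabs_mult, (Rabs_minus_sym t u).
      apply Rmult_le_compat_r; [apply Rabs_pos|].
      assert (Rabs (df c) <= B) by (apply Hb; lra). assert (B <= Rabs B) by apply RRle_abs. lra. }
  intros t u Ht Hu. destruct (Rtotal_order t u) as [H|[H|H]].
  - auto.
  - subst. unfold Rminus. rewrite !Rplus_opp_r, Rabs_R0. lra.
  - rewrite Rabs_minus_sym, (Rabs_minus_sym t u). auto.
Qed.

Lemma frequently_ge_of_not_lim_0 (f : R -> R) (t0 eps : R) : (forall t, t0 < t -> 0 <= f t) ->
  ~ (exists M, forall t, M < t -> Rabs (f t - 0) < eps) ->
  forall M, exists t, M < t /\ t0 < t /\ eps <= f t.
Proof.
  intros Hf Hno M. apply NNPP. intros Hn. apply Hno. exists (Rmax M t0). intros t Ht.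
  assert (M < t /\ t0 < t) as [HM Ht0] by (split; eapply Rle_lt_trans; eauto; [apply Rmax_l | apply Rmax_r]).
  rewrite Rminus_0_r, Rabs_right by (apply Rle_ge, Hf; auto).
  destruct (Rlt_le_dec (f t) eps) as [h|h]; auto.
  exfalso. apply Hn. exists t. auto.
Qed.

(* Each time f exceeds eps it stays above eps/2 for a fixed time (f is Lipschitz),
   costing V a fixed amount; V >= 0 allows this only finitely often. *)
Lemma barbalat (V dV f df : R -> R) (t0 c : R) :
  0 < c ->
  (forall t, t0 < t -> is_derive V t (dV t)) ->
  (forall t, t0 < t -> dV t <= - c * f t) ->
  (forall t, t0 < t -> 0 <= V t) ->
  (forall t, t0 < t -> 0 <= f t) ->
  (forall t, t0 < t -> is_derive f t (df t)) -> bounded_from t0 df ->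
  is_lim f p_infty 0.
Proof.
  intros Hc Hd Hdv HV Hf Hdf Hb.
  destruct (lipschitz_of_bounded_derive f df t0 Hdf Hb) as [L [HL Hlip]].
  apply is_lim_p_infty_iff. intros eps He. apply NNPP. intros Hno.
  assert (Hinf := frequently_ge_of_not_lim_0 f t0 eps Hf Hno).
  set (h := eps / (2 * L)). assert (Hh : 0 < h) by (unfold h; Rpos).
  set (D := c * (eps / 2) * h). assert (HD : 0 < D) by (unfold D; Rpos).
  assert (Hdec : forall a b, t0 < a -> a <= b -> V b <= V a).
  { intros a b Ha Hab. apply (is_derive_nonpos_le V dV a b Hab).
    - intros x Hx. apply Hd. lra.
    - intros x Hx. specialize (Hdv x ltac:(lra)). specialize (Hf x ltac:(lra)). nra.
    - intros x Hx. apply is_derive_continuous with (dV x). apply Hd. lra. }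
  assert (Hn : forall n : nat, exists T, t0 + 1 <= T /\ V T <= V (t0 + 1) - INR n * D).
  { induction n as [|n [T [HT HVT]]]; [exists (t0 + 1); simpl; split; lra |].
    destruct (Hinf T) as [t [Ht1 [Ht2 Ht3]]].
    exists (t + h). split; [lra|].
    destruct (MVT_open V dV t (t + h)) as [xi [Hxi1 Hxi2]]; [lra | intros x Hx; apply Hd; lra | |].
    { intros x Hx. apply is_derive_continuous with (dV x). apply Hd. lra. }
    assert (Hfx : eps / 2 <= f xi).
    { assert (Hl := Hlip xi t ltac:(lra) ltac:(lra)).
      rewrite (Rabs_right (xi - t)) in Hl by lra. apply Rabs_le_between in Hl.
      assert (L * h = eps / 2) by (unfold h; field; lra). nra. }
    assert (Hstep : V (t + h) <= V t - D).
    { specialize (Hdv xi ltac:(lra)). unfold D. replace (t + h - t) with h in Hxi2 by ring.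
      assert (dV xi <= - (c * (eps / 2))) by nra.
      assert (dV xi * h <= - (c * (eps / 2)) * h) by (apply Rmult_le_compat_r; lra). lra. }
    assert (V t <= V T) by (apply Hdec; lra).
    rewrite S_INR. lra. }
  destruct (INR_unbounded (V (t0 + 1) / D)) as [n Hn'].
  destruct (Hn n) as [T [HT HVT]].
  assert (0 <= V T) by (apply HV; lra).
  assert (V (t0 + 1) / D * D < INR n * D) by (apply Rmult_lt_compat_r; lra).
  replace (V (t0 + 1) / D * D) with (V (t0 + 1)) in * by (field; lra). lra.
Qed.

Lemma is_lim_derive_0 (g dg ddg : R -> R) (t0 l : R) :
  (forall t, t0 < t -> is_derive g t (dg t)) ->
  (forall t, t0 < t -> is_derive dg t (ddg t)) -> bounded_from t0 ddg ->
  is_lim g p_infty l -> is_lim dg p_infty 0.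
Proof.
  intros Hd Hdd Hb Hl.
  destruct (lipschitz_of_bounded_derive dg ddg t0 Hdd Hb) as [M [HM Hlip]].
  apply is_lim_p_infty_iff. intros eps He.
  set (h := eps / (2 * M)). assert (Hh : 0 < h) by (unfold h; apply Rdiv_lt_0_compat; lra).
  destruct (proj1 (is_lim_p_infty_iff g l) Hl (eps * h / 4)) as [T HT]; [nra|].
  exists (Rmax T t0). intros t Ht.
  assert (T < t /\ t0 < t) as [HTt Ht0] by (split; eapply Rle_lt_trans; eauto; [apply Rmax_l | apply Rmax_r]).
  destruct (MVT_open g dg t (t + h)) as [xi [Hxi1 Hxi2]]; [lra| | |].
  - intros x Hx. apply Hd. lra.
  - intros x Hx. apply is_derive_continuous with (dg x). apply Hd. lra.
  - replace (t + h - t) with h in Hxi2 by ring.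
    assert (A1 := HT t HTt). assert (A2 := HT (t + h) ltac:(lra)).
    assert (Hxi : Rabs (dg xi) * h < eps * h / 2).
    { replace (Rabs (dg xi) * h) with (Rabs (g (t + h) - g t))
        by (rewrite Hxi2, Rabs_mult, (Rabs_right h); lra).
      replace (g (t + h) - g t) with ((g (t + h) - l) - (g t - l)) by ring.
      eapply Rle_lt_trans. apply Rabs_triang. rewrite Rabs_Ropp. lra. }
    assert (Hxi' : Rabs (dg xi) < eps / 2) by (apply Rmult_lt_reg_r with h; lra).
    assert (Hl2 := Hlip t xi Ht0 ltac:(lra)).
    rewrite (Rabs_left (t - xi)) in Hl2 by lra.
    assert (M * h = eps / 2) by (unfold h; field; lra).
    rewrite Rminus_0_r. replace (dg t) with ((dg t - dg xi) + dg xi) by ring.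
    eapply Rle_lt_trans. apply Rabs_triang. nra.
Qed.

(** * The Volterra function *)

(* For [a = 0] the logarithmic term vanishes and [volterra 0 u = u]. *)
Definition volterra (a u : R) : R := u - a - a * ln (u / a).

Definition volterra_dom (a u : R) : Prop := 0 <= u /\ (0 < a -> 0 < u).

Lemma ln_le_sub_1 (x : R) : 0 < x -> ln x <= x - 1.
Proof. intros. assert (H1 := exp_ineq1_le (ln x)). rewrite exp_ln in H1; lra. Qed.

Lemma volterra_0 (u : R) : volterra 0 u = u.
Proof. unfold volterra. ring. Qed.

Lemma volterra_dom_cases (a u : R) : 0 <= a -> volterra_dom a u -> a = 0 \/ (0 < a /\ 0 < u).
Proof. intros Ha [_ Hu]. destruct (Req_dec a 0); [left|right]; auto. split; [|apply Hu]; lra. Qed.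

Lemma sqr_sqrt_dist_le_volterra (a u : R) : 0 < a -> 0 < u -> (sqrt u - sqrt a) ^ 2 <= volterra a u.
Proof.
  intros Ha Hu. set (U := sqrt u). set (A := sqrt a).
  assert (HU : 0 < U) by (apply sqrt_lt_R0; auto).
  assert (HA : 0 < A) by (apply sqrt_lt_R0; auto).
  assert (eu : u = U * U) by (unfold U; rewrite sqrt_sqrt; lra).
  assert (ea : a = A * A) by (unfold A; rewrite sqrt_sqrt; lra).
  assert (HUA : 0 < U / A) by (apply Rdiv_lt_0_compat; auto).
  assert (L : ln (u / a) = 2 * ln (U / A)).
  { replace (u / a) with ((U / A) * (U / A)) by (rewrite eu, ea; field; lra).
    rewrite ln_mult; auto. ring. }
  assert (L2 : A * A * ln (U / A) <= A * A * (U / A - 1))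
    by (apply Rmult_le_compat_l; [nra | apply ln_le_sub_1; auto]).
  replace (A * A * (U / A - 1)) with (A * U - A * A) in L2 by (field; lra).
  assert (E2 : a * ln (U / A) = A * A * ln (U / A)) by (rewrite <- ea; ring).
  unfold volterra. rewrite L. replace ((U - A) ^ 2) with (U * U - 2 * A * U + A * A) by ring.
  clearbody U A. lra.
Qed.

Lemma volterra_nonneg (a u : R) : 0 <= a -> volterra_dom a u -> 0 <= volterra a u.
Proof.
  intros Ha Hd. destruct (volterra_dom_cases a u Ha Hd) as [->|[Ha' Hu]].
  - rewrite volterra_0. apply Hd.
  - assert (H2 := sqr_sqrt_dist_le_volterra a u Ha' Hu).
    assert (0 <= (sqrt u - sqrt a) ^ 2) by apply pow2_ge_0. lra.
Qed.

Lemma le_volterra (a u : R) : 0 <= a -> volterra_dom a u -> u <= 2 * (volterra a u + a).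
Proof.
  intros Ha Hd. destruct (volterra_dom_cases a u Ha Hd) as [->|[Ha' Hu]].
  - rewrite volterra_0. destruct Hd. lra.
  - assert (H2 := sqr_sqrt_dist_le_volterra a u Ha' Hu).
    assert (eu := sqrt_sqrt u ltac:(lra)). assert (ea := sqrt_sqrt a ltac:(lra)).
    assert (0 <= (sqrt u - 2 * sqrt a) ^ 2) by apply pow2_ge_0. nra.
Qed.

Lemma Rabs_sub_le_volterra (a u : R) : 0 <= a -> volterra_dom a u ->
  Rabs (u - a) <= volterra a u + 2 * sqrt a * sqrt (volterra a u).
Proof.
  intros Ha Hd. destruct (volterra_dom_cases a u Ha Hd) as [->|[Ha' Hu]].
  - rewrite volterra_0, sqrt_0, Rminus_0_r, Rabs_right by (apply Rle_ge, Hd). lra.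
  - assert (H2 := sqr_sqrt_dist_le_volterra a u Ha' Hu).
    set (U := sqrt u) in *. set (A := sqrt a) in *. set (D := volterra a u) in *.
    assert (HU : 0 < U) by (apply sqrt_lt_R0; auto).
    assert (HA : 0 < A) by (apply sqrt_lt_R0; auto).
    assert (eu : u = U * U) by (unfold U; rewrite sqrt_sqrt; lra).
    assert (ea : a = A * A) by (unfold A; rewrite sqrt_sqrt; lra).
    assert (HD : 0 <= D) by (assert (0 <= (U - A) ^ 2) by apply pow2_ge_0; lra).
    set (S := sqrt D).
    assert (eD : D = S * S) by (unfold S; rewrite sqrt_sqrt; lra).
    assert (HUA : Rabs (U - A) <= S).
    { rewrite <- sqrt_Rsqr_abs. apply sqrt_le_1_alt. unfold Rsqr. lra. }
    rewrite eu, ea. replace (U * U - A * A) with ((U - A) * (U + A)) by ring.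
    rewrite Rabs_mult, (Rabs_right (U + A)) by lra.
    assert (Rabs (U - A) * (U + A) <= S * (U + A)) by (apply Rmult_le_compat_r; lra).
    assert (U <= A + S) by (apply Rabs_le_between in HUA; lra).
    nra.
Qed.

(* [volterra a u <= (u - a)^2 / u] because [ln y >= 1 - 1/y]. *)
Lemma volterra_le_of_near (a u eta : R) : 0 < eta -> 2 * eta <= a ->
  Rabs (u - a) < eta -> volterra a u <= eta.
Proof.
  intros He Ha Hd. apply Rabs_lt_between in Hd.
  assert (Hu : 0 < u) by lra.
  assert (L := ln_le_sub_1 (a / u) (Rdiv_lt_0_compat a u ltac:(lra) Hu)).
  assert (E : ln (u / a) = - ln (a / u)).
  { replace (u / a) with (/ (a / u)) by (field; lra). rewrite ln_Rinv; auto. apply Rdiv_lt_0_compat; lra. }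
  unfold volterra. rewrite E.
  assert (a * ln (a / u) <= a * (a / u - 1)) by (apply Rmult_le_compat_l; lra).
  assert (u - a - a * - ln (a / u) <= (u - a) * (u - a) / u).
  { replace ((u - a) * (u - a) / u) with (u - a + a * (a / u - 1)) by (field; lra). lra. }
  assert ((u - a) * (u - a) / u <= eta * eta / (a / 2)).
  { apply Rmult_le_compat. apply Rle_0_sqr. left; apply Rinv_0_lt_compat; lra.
    nra. apply Rinv_le_contravar; lra. }
  assert (eta * eta / (a / 2) <= eta).
  { apply Rmult_le_reg_r with (a / 2); [lra|].
    replace (eta * eta / (a / 2) * (a / 2)) with (eta * eta) by (field; lra). nra. }
  lra.
Qed.

Lemma volterra_small_near (a r : R) : 0 <= a -> 0 < r ->
  exists eta, 0 < eta /\ forall u, 0 <= u -> Rabs (u - a) < eta ->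
    volterra_dom a u /\ volterra a u <= r.
Proof.
  intros Ha Hr. destruct (Req_dec a 0) as [->|Ha0].
  - exists r. split; auto. intros u Hu Hd. split; [split; auto; lra|].
    rewrite volterra_0. rewrite Rminus_0_r, Rabs_right in Hd; lra.
  - exists (Rmin r (a / 2)). split; [apply Rmin_case; lra|].
    intros u Hu Hd. assert (Hm1 := Rmin_l r (a / 2)). assert (Hm2 := Rmin_r r (a / 2)).
    split.
    + split; auto. intros _. apply Rabs_lt_between in Hd. lra.
    + assert (volterra a u <= Rmin r (a / 2)); [|lra].
      apply volterra_le_of_near; auto. apply Rmin_case; lra. lra.
Qed.

Lemma volterra_small_close (a eps : R) : 0 <= a -> 0 < eps ->
  exists rho, 0 < rho /\ forall u, volterra_dom a u -> volterra a u <= rho -> Rabs (u - a) < eps.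
Proof.
  intros Ha He. set (rho := Rmin (eps / 4) (eps * eps / (16 * (a + 1)))).
  assert (H1 : rho <= eps / 4) by apply Rmin_l.
  assert (H2 : rho <= eps * eps / (16 * (a + 1))) by apply Rmin_r.
  exists rho. split.
  { apply Rmin_case; [lra|]. apply Rdiv_lt_0_compat; nra. }
  intros u Hd HV. assert (HV0 := volterra_nonneg a u Ha Hd).
  assert (Hc := Rabs_sub_le_volterra a u Ha Hd).
  assert (S : sqrt a * sqrt (volterra a u) <= eps / 4).
  { rewrite <- sqrt_mult by lra.
    replace (eps / 4) with (sqrt ((eps / 4) * (eps / 4))) by (rewrite sqrt_square; lra).
    apply sqrt_le_1_alt.
    assert (a * volterra a u <= (a + 1) * rho) by (apply Rmult_le_compat; lra).
    assert ((a + 1) * rho <= (a + 1) * (eps * eps / (16 * (a + 1)))) by (apply Rmult_le_compat_l; lra).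
    replace ((a + 1) * (eps * eps / (16 * (a + 1)))) with (eps / 4 * (eps / 4)) in H0 by (field; lra).
    lra. }
  lra.
Qed.

Lemma volterra_weighted_close (a c eps : R) : 0 <= a -> 0 < c -> 0 < eps ->
  exists R, 0 < R /\ forall u, volterra_dom a u -> c * volterra a u <= R -> Rabs (u - a) < eps.
Proof.
  intros Ha Hc He. destruct (volterra_small_close a eps Ha He) as [rho [Hrho H]].
  exists (c * rho). split; [Rpos |]. intros u Hd Hu. apply H; auto.
  apply (Rmult_le_reg_l c); auto.
Qed.

Lemma Rabs_mult_sub_lt (a b c d e : R) : 0 <= c -> 0 <= d -> e <= 1 ->
  Rabs (a - c) < e -> Rabs (b - d) < e -> Rabs (a * b - c * d) < e * (c + d + 1).
Proof.
  intros Hc Hd He1 Ha Hb.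
  replace (a * b - c * d) with ((a - c) * b + c * (b - d)) by ring.
  eapply Rle_lt_trans; [apply Rabs_triang |]. rewrite !Rabs_mult, (Rabs_right c) by lra.
  assert (Rabs b <= d + 1) by (apply Rabs_lt_between in Hb; apply Rabs_le; lra).
  assert (Rabs (a - c) * Rabs b <= Rabs (a - c) * (d + 1)) by (apply Rmult_le_compat_l; [apply Rabs_pos | lra]).
  assert (Rabs (a - c) * (d + 1) < e * (d + 1)) by (apply Rmult_lt_compat_r; lra).
  assert (c * Rabs (b - d) <= c * e) by (apply Rmult_le_compat_l; lra).
  lra.
Qed.

Lemma volterra_small_near_pair (a b r : R) : 0 <= a -> 0 <= b -> 0 < r ->
  exists eta, 0 < eta /\ forall u w, 0 <= u -> 0 <= w -> Rabs (u - a) < eta -> Rabs (w - b) < eta ->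
    (volterra_dom a u /\ volterra a u <= r) /\ (volterra_dom b w /\ volterra b w <= r) /\
    volterra (a * b) (u * w) <= r.
Proof.
  intros Ha Hb Hr.
  destruct (volterra_small_near a r) as [e1 [He1 N1]]; auto.
  destruct (volterra_small_near b r) as [e2 [He2 N2]]; auto.
  destruct (volterra_small_near (a * b) r) as [e3 [He3 N3]]; [nra | auto |].
  set (eta := Rmin (Rmin 1 e1) (Rmin e2 (e3 / (a + b + 1)))).
  exists eta. split; [unfold eta; repeat apply Rmin_pos; Rpos |].
  assert (Hetas : eta <= 1 /\ eta <= e1 /\ eta <= e2 /\ eta <= e3 / (a + b + 1))
    by (unfold eta; repeat split; Rmin_le).
  intros u w Hu Hw Hua Hwb. destruct Hetas as (H1 & H2 & H3 & H4).
  split; [apply N1; auto; lra | split; [apply N2; auto; lra |]].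
  apply N3; [nra |]. apply Rlt_le_trans with (eta * (a + b + 1)).
  - apply Rabs_mult_sub_lt; auto.
  - apply (Rmult_le_reg_r (/ (a + b + 1))); [Rpos |].
    replace (eta * (a + b + 1) * / (a + b + 1)) with eta by (field; lra). exact H4.
Qed.

Lemma is_derive_volterra (a : R) (u : R -> R) (t du : R) : 0 <= a -> volterra_dom a (u t) ->
  is_derive u t du -> is_derive (fun x => volterra a (u x)) t ((1 - a / u t) * du).
Proof.
  intros Ha Hc Hd. destruct (volterra_dom_cases a (u t) Ha Hc) as [->|[Ha' Hp]].
  - apply (is_derive_Rext u). intros; rewrite volterra_0; auto.
    eapply is_derive_val; eauto. unfold Rdiv; ring.
  - assert (Hd' : is_derive (fun x => / a * u x) t (/ a * du)) by (apply is_derive_Rscal; auto).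
    unfold volterra. eapply is_derive_val.
    + apply is_derive_Rminus. apply is_derive_Rminus. exact Hd. apply is_derive_Rconst.
      apply is_derive_Rscal. apply (is_derive_Rext (fun x => ln (/ a * u x))); [intros; unfold Rdiv; f_equal; ring|].
      apply is_derive_ln_comp; [|exact Hd']. apply Rmult_lt_0_compat; [apply Rinv_0_lt_compat|]; lra.
    + cbv beta. field. lra.
Qed.

Lemma continuous_volterra (a : R) (u : R -> R) (t : R) : 0 <= a -> volterra_dom a (u t) ->
  continuous u t -> continuous (fun x => volterra a (u x)) t.
Proof.
  intros Ha Hc Hd. destruct (volterra_dom_cases a (u t) Ha Hc) as [->|[Ha' Hp]].
  - apply (continuous_Rext u); auto. intros; rewrite volterra_0; auto.
  - unfold volterra. apply continuous_Rminus. apply continuous_Rminus; auto. apply continuous_Rconst.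
    apply continuous_Rscal. apply continuous_ln_comp. apply Rdiv_lt_0_compat; lra.
    apply (continuous_Rext (fun x => / a * u x)); [intros; unfold Rdiv; ring|].
    apply continuous_Rscal; auto.
Qed.

Lemma Rabs_le_of_weighted_volterra (c a u C : R) : 0 < c -> 0 <= a -> volterra_dom a u ->
  c * volterra a u <= C -> Rabs u <= 2 * (C / c + a).
Proof.
  intros Hc Ha Hd HC. assert (H := le_volterra a u Ha Hd).
  assert (volterra a u <= C / c).
  { apply (Rmult_le_reg_l c); auto. replace (c * (C / c)) with C by (field; lra). auto. }
  rewrite Rabs_right by (apply Rle_ge, Hd). lra.
Qed.

(** * The Lyapunov functional *)

Section Lyapunov.

Variables s d k dl p N mu q b tau E Ei : R.
Hypotheses (Hd : 0 < d) (Hk : 0 < k) (Hdl : 0 < dl) (Hp : 0 < p) (HN : 0 < N)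
  (Hmu : 0 < mu) (Hq : 0 < q) (Hb : 0 < b) (Htau : 0 < tau) (HE : 0 < E) (HEEi : E * Ei = 1).

Definition rhs_x (x w : R) : R := s - d * x - k * x * w.
Definition rhs_y (y z xt wt : R) : R := k * E * xt * wt - dl * y - p * y * z.
Definition rhs_v (y w : R) : R := N * dl * y - mu * w.
Definition rhs_z (y z : R) : R := q * y * z - b * z.

(* The two inequalities say that the virus, resp. the immune response, cannot
   invade the equilibrium; they are equalities when the component is positive. *)
Record lyap_equilibrium (xs ys vs zs : R) : Prop := {
  eq_xs_pos : 0 < xs;
  eq_ys_nonneg : 0 <= ys;
  eq_vs_nonneg : 0 <= vs;
  eq_zs_nonneg : 0 <= zs;
  eq_x : s = d * xs + k * xs * vs;
  eq_v : N * dl * ys = mu * vs;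
  eq_y : k * E * xs * vs = (dl + p * zs) * ys;
  eq_virus_bound : k * xs * (N * dl) <= Ei * (dl + p * zs) * mu;
  eq_immune_bound : q * ys <= b;
  eq_z : zs * (q * ys - b) = 0 }.

(* The weights for which the terms in y and y z of the derivative of the functional cancel. *)
Definition weight_v (zs : R) : R := Ei * (dl + p * zs) / (N * dl).
Definition weight_z : R := Ei * p / q.

Lemma Ei_pos : 0 < Ei.
Proof. destruct (Rle_dec Ei 0); [|lra]. assert (E * Ei <= 0) by (apply Rmult_le_0_l; lra). lra. Qed.

Lemma weight_v_pos (zs : R) : 0 <= zs -> 0 < weight_v zs.
Proof.
  intros Hz. assert (HEi := Ei_pos). unfold weight_v.
  apply Rdiv_lt_0_compat; [apply Rmult_lt_0_compat|]; nra.
Qed.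

Lemma weight_z_pos : 0 < weight_z.
Proof. assert (HEi := Ei_pos). unfold weight_z. apply Rdiv_lt_0_compat; nra. Qed.

(* Derivative of the Lyapunov functional at the state (x, y, w, z) with delayed state (xt, wt). *)
Definition lyap_rate (xs ys vs zs x y w z xt wt : R) : R :=
  (1 - xs / x) * rhs_x x w + Ei * ((1 - ys / y) * rhs_y y z xt wt)
  + weight_v zs * ((1 - vs / w) * rhs_v y w) + weight_z * ((1 - zs / z) * rhs_z y z)
  + k * (volterra (xs * vs) (x * w) - volterra (xs * vs) (xt * wt)).

Lemma eq_ys_pos (xs ys vs zs : R) : lyap_equilibrium xs ys vs zs -> 0 < vs -> 0 < ys.
Proof.
  intros Heq Hv. assert (E2 := eq_v _ _ _ _ Heq). assert (Hys := eq_ys_nonneg _ _ _ _ Heq).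
  destruct (Req_dec ys 0) as [->|]; [|lra]. assert (0 < mu * vs) by Rpos. lra.
Qed.

Lemma virus_coef_nonpos (xs ys vs zs : R) : lyap_equilibrium xs ys vs zs ->
  k * xs - weight_v zs * mu <= 0.
Proof.
  intros Heq. assert (Hv := eq_virus_bound _ _ _ _ Heq).
  assert (HN' : 0 < N * dl) by nra.
  assert (k * xs * (N * dl) <= weight_v zs * mu * (N * dl))
    by (unfold weight_v; replace (Ei * (dl + p * zs) / (N * dl) * mu * (N * dl))
          with (Ei * (dl + p * zs) * mu) by (field; lra); auto).
  nra.
Qed.

Lemma lyap_rate_le_free (xs x y w z xt wt : R) : lyap_equilibrium xs 0 0 0 ->
  0 < x -> 0 <= w ->
  lyap_rate xs 0 0 0 x y w z xt wt <= - d * (x - xs) ^ 2 / x + Ei * p * (0 - b / q) * z.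
Proof.
  intros Heq Hx Hw. assert (Hc := virus_coef_nonpos _ _ _ _ Heq).
  assert (E1 := eq_x _ _ _ _ Heq).
  assert (HEi : Ei = / E) by (field_simplify_eq; lra).
  assert (Heqn : lyap_rate xs 0 0 0 x y w z xt wt
    = - d * (x - xs) ^ 2 / x + (k * xs - weight_v 0 * mu) * w + Ei * p * (0 - b / q) * z).
  { unfold lyap_rate, weight_v, weight_z, rhs_x, rhs_y, rhs_v, rhs_z.
    replace (xs * 0) with 0 by ring. rewrite !volterra_0, E1. unfold Rdiv. rewrite !Rmult_0_l. rewrite HEi. field. lra. }
  rewrite Heqn. assert ((k * xs - weight_v 0 * mu) * w <= 0) by (apply Rmult_le_0_r; lra). lra.
Qed.

Lemma immune_term_eq (zs y z : R) : 0 <= zs -> volterra_dom zs z ->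
  (1 - zs / z) * rhs_z y z = (z - zs) * (q * y - b).
Proof.
  intros Hzs Hz. unfold rhs_z. destruct (volterra_dom_cases zs z Hzs Hz) as [->|[_ Hz']].
  - unfold Rdiv; ring.
  - field; lra.
Qed.

(* With r1 r2 r3 the three ratios below, ln r1 + ln r2 + ln r3 is the difference of
   the logarithmic parts of the two Volterra terms, and ln r <= r - 1 closes the bound. *)
Lemma lyap_rate_le_infected (xs ys vs zs x y w z xt wt : R) : lyap_equilibrium xs ys vs zs ->
  0 < vs -> 0 < x -> 0 < y -> 0 < w -> volterra_dom zs z -> 0 < xt -> 0 < wt ->
  lyap_rate xs ys vs zs x y w z xt wt <= - d * (x - xs) ^ 2 / x + Ei * p * (ys - b / q) * z.
Proof.
  intros Heq Hv Hx Hy Hw Hz Hxt Hwt.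
  assert (Hys' := eq_ys_pos _ _ _ _ Heq Hv).
  destruct Heq as [Hxs Hys Hvs Hzs E1 E2 E3 E4 E5 E6].
  assert (HEi : Ei = / E) by (field_simplify_eq; lra).
  set (ws := xs * vs). assert (Hws : 0 < ws) by (unfold ws; nra).
  set (r1 := xs / x). set (r2 := xt * wt * ys / (ws * y)). set (r3 := y * vs / (ys * w)).
  assert (Hr1 : 0 < r1) by (unfold r1; Rpos).
  assert (Hr2 : 0 < r2) by (unfold r2; Rpos).
  assert (Hr3 : 0 < r3) by (unfold r3; Rpos).
  set (La := ln (x * w / ws)). set (Lb := ln (xt * wt / ws)).
  assert (Hsum : ln r1 + ln r2 + ln r3 = Lb - La).
  { unfold La, Lb. rewrite <- ln_div, <- !ln_mult by Rpos.
    f_equal. unfold r1, r2, r3, ws. field. repeat split; lra. }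
  assert (Ek : k = (dl + p * zs) * ys / (E * xs * vs)) by (rewrite <- E3; field; repeat split; lra).
  assert (Emu : mu = N * dl * ys / vs) by (rewrite E2; field; lra).
  assert (Heqn : lyap_rate xs ys vs zs x y w z xt wt
      = - d * (x - xs) ^ 2 / x + (k * xs - weight_v zs * mu) * w
        + Ei * p * (ys - b / q) * z + Ei * p * zs * (b / q - ys)
        - k * ws * ((r1 - 1) + (r2 - 1) + (r3 - 1)) + k * ws * (Lb - La)).
  { unfold lyap_rate. rewrite (immune_term_eq zs y z) by auto. unfold volterra, weight_v, weight_z, rhs_x, rhs_y, rhs_v.
    fold ws La Lb. unfold r1, r2, r3. rewrite E1. unfold ws.
    rewrite Ek, Emu, HEi. field. repeat split; lra. }
  rewrite Heqn, <- Hsum.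
  assert (h1 := ln_le_sub_1 r1 Hr1). assert (h2 := ln_le_sub_1 r2 Hr2). assert (h3 := ln_le_sub_1 r3 Hr3).
  assert (k * ws * (ln r1 + ln r2 + ln r3) <= k * ws * ((r1 - 1) + (r2 - 1) + (r3 - 1)))
    by (apply Rmult_le_compat_l; nra).
  assert (Ez : Ei * p * zs * (b / q - ys) = 0).
  { replace (Ei * p * zs * (b / q - ys)) with (- (Ei * p / q) * (zs * (q * ys - b))) by (field; lra).
    rewrite E6. ring. }
  assert (Hc := virus_coef_nonpos xs ys vs zs ltac:(constructor; auto)).
  assert ((k * xs - weight_v zs * mu) * w <= 0) by (apply Rmult_le_0_r; lra).
  lra.
Qed.

Lemma lyap_rate_le (xs ys vs zs x y w z xt wt : R) : lyap_equilibrium xs ys vs zs ->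
  0 < x -> volterra_dom ys y -> volterra_dom vs w -> volterra_dom zs z ->
  0 < xt -> volterra_dom vs wt ->
  lyap_rate xs ys vs zs x y w z xt wt <= - d * (x - xs) ^ 2 / x + Ei * p * (ys - b / q) * z.
Proof.
  intros Heq Hx Hy Hw Hz Hxt Hwt.
  destruct (volterra_dom_cases vs w (eq_vs_nonneg _ _ _ _ Heq) Hw) as [Hv0|[Hv Hw']].
  - assert (Hys : ys = 0).
    { assert (E2 := eq_v _ _ _ _ Heq). rewrite Hv0 in E2.
      assert (N * dl <> 0) by nra. apply (Rmult_eq_reg_l (N * dl)); lra. }
    assert (Hzs : zs = 0).
    { assert (E6 := eq_z _ _ _ _ Heq). rewrite Hys in E6. nra. }
    subst vs ys zs. apply lyap_rate_le_free; auto. apply Hw.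
  - apply lyap_rate_le_infected; auto.
    apply (proj2 Hy (eq_ys_pos _ _ _ _ Heq Hv)). apply (proj2 Hwt Hv).
Qed.

Record lyap_state (xs ys vs zs : R) (X Y W Z : R -> R) : Prop := {
  st_X : forall u, 0 < X u;
  st_Y : forall u, volterra_dom ys (Y u);
  st_W : forall u, volterra_dom vs (W u);
  st_Z : forall u, volterra_dom zs (Z u);
  st_cont_X : forall u, continuous X u;
  st_cont_Y : forall u, continuous Y u;
  st_cont_W : forall u, continuous W u;
  st_cont_Z : forall u, continuous Z u }.

Definition solves_from (X Y W Z : R -> R) (t0 : R) : Prop :=
  forall t, t0 < t ->
    is_derive X t (rhs_x (X t) (W t)) /\
    is_derive Y t (rhs_y (Y t) (Z t) (X (t - tau)) (W (t - tau))) /\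
    is_derive W t (rhs_v (Y t) (W t)) /\
    is_derive Z t (rhs_z (Y t) (Z t)).

Definition lyap_integrand (xs vs : R) (X W : R -> R) (u : R) : R := volterra (xs * vs) (X u * W u).

(* The delay term, an integral over [t - tau, t], is written as a difference of two
   integrals from 0 so that the fundamental theorem of calculus applies to each. *)
Definition lyap (xs ys vs zs : R) (X Y W Z : R -> R) (t : R) : R :=
  volterra xs (X t) + Ei * volterra ys (Y t) + weight_v zs * volterra vs (W t)
  + weight_z * volterra zs (Z t)
  + k * (RInt (lyap_integrand xs vs X W) 0 t - RInt (lyap_integrand xs vs X W) 0 (t - tau)).

Section Trajectory.

Variables xs ys vs zs : R.
Hypothesis Heq : lyap_equilibrium xs ys vs zs.
Variables X Y W Z : R -> R.
Hypothesis Hst : lyap_state xs ys vs zs X Y W Z.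

Local Notation V := (lyap xs ys vs zs X Y W Z).
Local Notation G := (lyap_integrand xs vs X W).

Lemma integrand_dom (u : R) : volterra_dom (xs * vs) (X u * W u).
Proof.
  assert (HX := st_X _ _ _ _ _ _ _ _ Hst u). destruct (st_W _ _ _ _ _ _ _ _ Hst u) as [HW HW'].
  split; [nra|]. intros H. apply Rmult_lt_0_compat; auto. apply HW'.
  assert (Hxs := eq_xs_pos _ _ _ _ Heq). nra.
Qed.

Lemma continuous_lyap_integrand (u : R) : continuous G u.
Proof.
  assert (Hxs := eq_xs_pos _ _ _ _ Heq). assert (Hvs := eq_vs_nonneg _ _ _ _ Heq).
  apply (continuous_volterra (xs * vs) (fun u => X u * W u)); [nra | apply integrand_dom|].
  apply continuous_Rmult; [apply (st_cont_X _ _ _ _ _ _ _ _ Hst) | apply (st_cont_W _ _ _ _ _ _ _ _ Hst)].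
Qed.

Lemma ex_RInt_lyap_integrand (a c : R) : ex_RInt G a c.
Proof. apply (ex_RInt_continuous (V := R_CompleteNormedModule)). intros; apply continuous_lyap_integrand. Qed.

Lemma lyap_delay_eq (t : R) : RInt G 0 t - RInt G 0 (t - tau) = RInt G (t - tau) t.
Proof.
  assert (C := RInt_Chasles (V := R_CompleteNormedModule) G 0 (t - tau) t
                 (ex_RInt_lyap_integrand _ _) (ex_RInt_lyap_integrand _ _)).
  change (RInt G 0 (t - tau) + RInt G (t - tau) t = RInt G 0 t) in C. lra.
Qed.

Lemma lyap_integrand_nonneg (u : R) : 0 <= G u.
Proof.
  assert (Hxs := eq_xs_pos _ _ _ _ Heq). assert (Hvs := eq_vs_nonneg _ _ _ _ Heq).
  apply volterra_nonneg; [nra | apply integrand_dom].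
Qed.

Lemma lyap_delay_nonneg (t : R) : 0 <= RInt G 0 t - RInt G 0 (t - tau).
Proof.
  rewrite lyap_delay_eq. apply RInt_ge_0; [lra | apply ex_RInt_lyap_integrand |].
  intros u _. apply lyap_integrand_nonneg.
Qed.

Lemma lyap_terms_le (t : R) :
  volterra xs (X t) <= V t /\ Ei * volterra ys (Y t) <= V t /\
  weight_v zs * volterra vs (W t) <= V t /\ weight_z * volterra zs (Z t) <= V t /\ 0 <= V t.
Proof.
  destruct Heq as [Hxs Hys Hvs Hzs _ _ _ _ _ _].
  destruct Hst as [HX HY HW HZ _ _ _ _].
  assert (A1 : 0 <= volterra xs (X t)) by (apply volterra_nonneg; [lra | split; [left|]; auto]).
  assert (A2 : 0 <= Ei * volterra ys (Y t)) by (apply Rmult_le_pos; [left; apply Ei_pos | apply volterra_nonneg; auto]).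
  assert (A3 : 0 <= weight_v zs * volterra vs (W t))
    by (apply Rmult_le_pos; [left; apply weight_v_pos; auto | apply volterra_nonneg; auto]).
  assert (A4 : 0 <= weight_z * volterra zs (Z t))
    by (apply Rmult_le_pos; [left; apply weight_z_pos | apply volterra_nonneg; auto]).
  assert (A5 : 0 <= k * (RInt G 0 t - RInt G 0 (t - tau))) by (apply Rmult_le_pos; [lra | apply lyap_delay_nonneg]).
  unfold lyap. lra.
Qed.

Lemma continuous_lyap (t : R) : continuous V t.
Proof.
  assert (Hxs := eq_xs_pos _ _ _ _ Heq). assert (Hys := eq_ys_nonneg _ _ _ _ Heq).
  assert (Hvs := eq_vs_nonneg _ _ _ _ Heq). assert (Hzs := eq_zs_nonneg _ _ _ _ Heq).
  destruct Hst as [HX HY HW HZ CX CY CW CZ].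
  unfold lyap.
  apply continuous_Rplus; [apply continuous_Rplus; [apply continuous_Rplus; [apply continuous_Rplus|]|]|].
  - apply continuous_volterra; auto; [lra | split; [left|]; auto].
  - apply continuous_Rscal, continuous_volterra; auto.
  - apply continuous_Rscal, continuous_volterra; auto.
  - apply continuous_Rscal, continuous_volterra; auto.
  - apply continuous_Rscal, continuous_Rminus.
    + apply is_derive_continuous with (G t). apply is_derive_RInt_continuous, continuous_lyap_integrand.
    + apply is_derive_continuous with (G (t - tau)).
      apply is_derive_shift, is_derive_RInt_continuous, continuous_lyap_integrand.
Qed.

Lemma lyap_le_of_terms_le (t r : R) :
  volterra xs (X t) <= r -> volterra ys (Y t) <= r -> volterra vs (W t) <= r -> volterra zs (Z t) <= r ->
  (forall u, t - tau <= u <= t -> G u <= r) ->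
  V t <= (1 + Ei + weight_v zs + weight_z + k * tau) * r.
Proof.
  intros H1 H2 H3 H4 HG. assert (HEi := Ei_pos).
  assert (Hv := weight_v_pos zs (eq_zs_nonneg _ _ _ _ Heq)). assert (Hz := weight_z_pos).
  assert (HI : RInt G (t - tau) t <= tau * r).
  { assert (HR := abs_RInt_le_const G (t - tau) t r ltac:(lra) (ex_RInt_lyap_integrand _ _)).
    replace (t - (t - tau)) with tau in HR by ring.
    assert (RInt G (t - tau) t <= Rabs (RInt G (t - tau) t)) by apply RRle_abs.
    assert (Rabs (RInt G (t - tau) t) <= tau * r); [|lra].
    apply HR. intros u Hu. rewrite Rabs_right by (apply Rle_ge, lyap_integrand_nonneg). auto. }
  unfold lyap. rewrite lyap_delay_eq.
  assert (Ei * volterra ys (Y t) <= Ei * r) by (apply Rmult_le_compat_l; lra).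
  assert (weight_v zs * volterra vs (W t) <= weight_v zs * r) by (apply Rmult_le_compat_l; lra).
  assert (weight_z * volterra zs (Z t) <= weight_z * r) by (apply Rmult_le_compat_l; lra).
  assert (k * RInt G (t - tau) t <= k * (tau * r)) by (apply Rmult_le_compat_l; lra).
  lra.
Qed.

Variable t0 : R.
Hypothesis Hsol : solves_from X Y W Z t0.

Local Notation rate t := (lyap_rate xs ys vs zs (X t) (Y t) (W t) (Z t) (X (t - tau)) (W (t - tau))).

Lemma is_derive_lyap (t : R) : t0 < t -> is_derive V t (rate t).
Proof.
  intros Ht. destruct (Hsol t Ht) as (DX & DY & DW & DZ).
  assert (Hxs := eq_xs_pos _ _ _ _ Heq). assert (Hys := eq_ys_nonneg _ _ _ _ Heq).
  assert (Hvs := eq_vs_nonneg _ _ _ _ Heq). assert (Hzs := eq_zs_nonneg _ _ _ _ Heq).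
  destruct Hst as [HX HY HW HZ CX CY CW CZ].
  unfold lyap, lyap_rate.
  apply is_derive_Rplus; [apply is_derive_Rplus; [apply is_derive_Rplus; [apply is_derive_Rplus|]|]|].
  - apply is_derive_volterra; auto; [lra | split; [left|]; auto].
  - apply is_derive_Rscal, is_derive_volterra; auto.
  - apply is_derive_Rscal, is_derive_volterra; auto.
  - apply is_derive_Rscal, is_derive_volterra; auto.
  - apply (is_derive_Rscal _ k t (G t - G (t - tau))), is_derive_Rminus.
    + apply is_derive_RInt_continuous, continuous_lyap_integrand.
    + apply is_derive_shift, is_derive_RInt_continuous, continuous_lyap_integrand.
Qed.

Lemma lyap_rate_bound (t : R) : t0 < t ->
  rate t <= - d * (X t - xs) ^ 2 / X t + Ei * p * (ys - b / q) * Z t /\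
  - d * (X t - xs) ^ 2 / X t <= 0 /\ Ei * p * (ys - b / q) * Z t <= 0.
Proof.
  intros Ht. assert (HEi := Ei_pos).
  destruct Hst as [HX HY HW HZ _ _ _ _].
  split; [|split].
  - apply lyap_rate_le; auto.
  - assert (0 <= d * (X t - xs) ^ 2 / X t); [|lra].
    apply Rmult_le_pos; [apply Rmult_le_pos; [lra | apply pow2_ge_0] | left; apply Rinv_0_lt_compat, HX].
  - assert (ys - b / q <= 0).
    { assert (H5 := eq_immune_bound _ _ _ _ Heq).
      apply Rle_minus. apply (Rmult_le_reg_l q); auto. replace (q * (b / q)) with b by (field; lra). auto. }
    assert (0 <= Z t) by apply HZ. assert (0 <= Ei * p) by nra.
    apply Rmult_le_0_r; auto. apply Rmult_le_0_l; auto.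
Qed.

Lemma lyap_nonincreasing (t : R) : t0 <= t -> V t <= V t0.
Proof.
  intros Ht. apply (is_derive_nonpos_le V (fun t => rate t) t0 t Ht).
  - intros u Hu. apply is_derive_lyap. lra.
  - intros u Hu. destruct (lyap_rate_bound u ltac:(lra)) as (H1 & H2 & H3). lra.
  - intros u _. apply continuous_lyap.
Qed.

Lemma lyap_volterra_bounds (t : R) : t0 <= t ->
  volterra xs (X t) <= V t0 /\ Ei * volterra ys (Y t) <= V t0 /\
  weight_v zs * volterra vs (W t) <= V t0 /\ weight_z * volterra zs (Z t) <= V t0.
Proof.
  intros Ht. assert (H := lyap_nonincreasing t Ht). destruct (lyap_terms_le t) as (H1 & H2 & H3 & H4 & _).
  repeat split; lra.
Qed.

Lemma state_bounded :
  bounded_from t0 X /\ bounded_from t0 Y /\ bounded_from t0 W /\ bounded_from t0 Z.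
Proof.
  destruct Heq as [Hxs Hys Hvs Hzs _ _ _ _ _ _].
  destruct Hst as [HX HY HW HZ _ _ _ _].
  repeat split; eexists; intros t Ht; destruct (lyap_volterra_bounds t Ht) as (H1 & H2 & H3 & H4).
  - apply (Rabs_le_of_weighted_volterra 1 xs _ (V t0)); [lra | lra | split; [left|]; auto | lra].
  - apply (Rabs_le_of_weighted_volterra Ei ys); [apply Ei_pos | auto | auto | exact H2].
  - apply (Rabs_le_of_weighted_volterra (weight_v zs) vs); [apply weight_v_pos; auto | auto | auto | exact H3].
  - apply (Rabs_le_of_weighted_volterra weight_z zs); [apply weight_z_pos | auto | auto | exact H4].
Qed.

Local Notation FX t := (rhs_x (X t) (W t)).
Local Notation FY t := (rhs_y (Y t) (Z t) (X (t - tau)) (W (t - tau))).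
Local Notation FW t := (rhs_v (Y t) (W t)).
Local Notation FZ t := (rhs_z (Y t) (Z t)).

Lemma rhs_bounded :
  bounded_from t0 (fun t => FX t) /\ bounded_from (t0 + tau) (fun t => FY t) /\
  bounded_from t0 (fun t => FW t) /\ bounded_from t0 (fun t => FZ t).
Proof.
  destruct state_bounded as (BX & BY & BW & BZ).
  assert (BX' := bounded_from_shift t0 tau X BX). assert (BW' := bounded_from_shift t0 tau W BW).
  assert (BY' := bounded_from_mono t0 (t0 + tau) Y ltac:(lra) BY).
  assert (BZ' := bounded_from_mono t0 (t0 + tau) Z ltac:(lra) BZ).
  unfold rhs_x, rhs_y, rhs_v, rhs_z. repeat split; prove_bounded.
Qed.

Lemma is_derive_rhs_x (t : R) : t0 < t ->
  is_derive (fun t => FX t) t (- d * FX t - k * (FX t * W t + X t * FW t)).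
Proof.
  intros Ht. destruct (Hsol t Ht) as (DX & _ & DW & _).
  apply (is_derive_Rext (fun u => s - d * X u - k * (X u * W u))); [intros u; unfold rhs_x; ring|].
  eapply is_derive_val.
  - apply is_derive_Rminus; [apply is_derive_Rminus|].
    + apply is_derive_Rconst.
    + apply is_derive_Rscal, DX.
    + apply is_derive_Rscal, is_derive_Rmult; [apply DX | apply DW].
  - ring.
Qed.

Lemma is_derive_rhs_v (t : R) : t0 < t ->
  is_derive (fun t => FW t) t (N * dl * FY t - mu * FW t).
Proof.
  intros Ht. destruct (Hsol t Ht) as (_ & DY & DW & _). unfold rhs_v at 1.
  apply is_derive_Rminus; apply is_derive_Rscal; auto.
Qed.

Lemma is_derive_rhs_y (t : R) : t0 + tau < t ->
  is_derive (fun t => FY t) t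
    (k * E * (FX (t - tau) * W (t - tau) + X (t - tau) * FW (t - tau)) - dl * FY t
     - p * (FY t * Z t + Y t * FZ t)).
Proof.
  intros Ht. destruct (Hsol t ltac:(lra)) as (_ & DY & _ & DZ).
  destruct (Hsol (t - tau) ltac:(lra)) as (DX' & _ & DW' & _).
  assert (D1 : is_derive (fun u => k * E * (X (u - tau) * W (u - tau))) t
                 (k * E * (FX (t - tau) * W (t - tau) + X (t - tau) * FW (t - tau)))).
  { apply is_derive_Rscal. apply (is_derive_Rmult (fun u => X (u - tau)) (fun u => W (u - tau)));
    apply is_derive_shift; auto. }
  assert (D2 : is_derive (fun u => dl * Y u) t (dl * FY t)) by (apply is_derive_Rscal; auto).
  assert (D3 : is_derive (fun u => p * (Y u * Z u)) t (p * (FY t * Z t + Y t * FZ t))).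
  { apply is_derive_Rscal. apply is_derive_Rmult; auto. }
  apply (is_derive_Rext (fun u => k * E * (X (u - tau) * W (u - tau)) - dl * Y u - p * (Y u * Z u))).
  { intros u. unfold rhs_y. ring. }
  apply is_derive_Rminus; [apply is_derive_Rminus|]; auto.
Qed.

Lemma attract_X : is_lim X p_infty xs.
Proof.
  destruct state_bounded as ([BX HBX] & _ & BW & _). destruct rhs_bounded as (BFX & _).
  assert (HX := st_X _ _ _ _ _ _ _ _ Hst).
  assert (HXB : forall t, t0 <= t -> X t <= BX)
    by (intros t Ht; specialize (HBX t Ht); rewrite Rabs_right in HBX; [lra | apply Rle_ge; left; auto]).
  assert (HB0 : 0 < BX) by (specialize (HXB t0 (Rle_refl _)); specialize (HX t0); lra).
  apply is_lim_of_sqr_dist.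
  apply (barbalat V (fun t => rate t) (fun t => (X t - xs) ^ 2) (fun t => 2 * (X t - xs) * FX t) t0 (d / BX)).
  - Rpos.
  - apply is_derive_lyap.
  - intros t Ht. destruct (lyap_rate_bound t Ht) as (H1 & _ & H3).
    assert (d / BX * (X t - xs) ^ 2 <= d * (X t - xs) ^ 2 / X t); [|lra].
    unfold Rdiv. rewrite (Rmult_comm d (/ BX)), Rmult_assoc, (Rmult_comm (/ BX)).
    apply Rmult_le_compat_l; [apply Rmult_le_pos; [lra | apply pow2_ge_0]|].
    apply Rinv_le_contravar; auto. apply HXB; lra.
  - intros t _. apply lyap_terms_le.
  - intros t _. apply pow2_ge_0.
  - intros t Ht. apply is_derive_sqr_dist, (Hsol t Ht).
  - apply bounded_from_mult; [apply bounded_from_mult|]; prove_bounded.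
    exists BX. exact HBX.
Qed.

Lemma attract_W : is_lim W p_infty vs.
Proof.
  assert (LX := attract_X). destruct state_bounded as (BX & _ & BW & _).
  destruct rhs_bounded as (BFX & _ & BFW & _).
  assert (HX := st_X _ _ _ _ _ _ _ _ Hst). destruct Heq as [Hxs _ _ _ E1 _ _ _ _ _].
  assert (LFX : is_lim (fun t => FX t) p_infty 0).
  { apply (is_lim_derive_0 X (fun t => FX t) (fun t => - d * FX t - k * (FX t * W t + X t * FW t)) t0 xs);
      auto.
    - intros t Ht. apply (Hsol t Ht).
    - apply is_derive_rhs_x.
    - prove_bounded. }
  apply (is_lim_ext_loc (fun t => (s - d * X t - FX t) / (k * X t))).
  { exists t0. intros t _. unfold rhs_x. field. split; [apply Rgt_not_eq, HX | lra]. }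
  replace vs with ((s - d * xs - 0) / (k * xs)) by (rewrite E1; field; lra).
  apply is_lim_Rdiv; [prove_lim | prove_lim | apply Rgt_not_eq; Rpos].
Qed.

Lemma attract_Y : is_lim Y p_infty ys.
Proof.
  assert (LW := attract_W). destruct state_bounded as (BX & BY & BW & BZ).
  destruct rhs_bounded as (BFX & BFY & BFW & BFZ).
  destruct Heq as [_ _ _ _ _ E2 _ _ _ _].
  assert (LFW : is_lim (fun t => FW t) p_infty 0).
  { apply (is_lim_derive_0 W (fun t => FW t) (fun t => N * dl * FY t - mu * FW t) (t0 + tau) vs); auto.
    - intros t Ht. apply (Hsol t ltac:(lra)).
    - intros t Ht. apply is_derive_rhs_v. lra.
    - apply (bounded_from_mono t0 (t0 + tau)) in BFW; [|lra]. prove_bounded. }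
  apply (is_lim_ext_loc (fun t => (FW t + mu * W t) / (N * dl))).
  { exists t0. intros t _. unfold rhs_v. field. lra. }
  replace ys with ((0 + mu * vs) / (N * dl)) by (rewrite <- E2; field; lra).
  apply is_lim_Rdiv; [prove_lim | prove_lim | apply Rgt_not_eq; Rpos].
Qed.

Lemma attract_Z : is_lim Z p_infty zs.
Proof.
  assert (LX := attract_X). assert (LW := attract_W). assert (LY := attract_Y).
  destruct state_bounded as (BX & BY & BW & BZ).
  destruct rhs_bounded as (BFX & BFY & BFW & BFZ).
  destruct Heq as [Hxs Hys Hvs Hzs _ E2 E3 _ _ E6].
  destruct (Req_dec ys 0) as [Hy0|Hy0].
  - assert (Hzs0 : zs = 0) by (rewrite Hy0 in E6; nra).
    cut (is_lim Z p_infty 0); [rewrite Hzs0; auto|].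
    apply (barbalat V (fun t => rate t) Z (fun t => FZ t) t0 (Ei * p * (b / q))).
    + assert (HEi := Ei_pos). Rpos.
    + apply is_derive_lyap.
    + intros t Ht. destruct (lyap_rate_bound t Ht) as (H1 & H2 & _).
      assert (Ei * p * (ys - b / q) * Z t = - (Ei * p * (b / q)) * Z t) by (rewrite Hy0; ring). lra.
    + intros t _. apply lyap_terms_le.
    + intros t _. apply (st_Z _ _ _ _ _ _ _ _ Hst).
    + intros t Ht. apply (Hsol t Ht).
    + auto.
  - assert (HY : forall t, 0 < Y t) by (intros t; apply (st_Y _ _ _ _ _ _ _ _ Hst t); lra).
    assert (LFY : is_lim (fun t => FY t) p_infty 0).
    { apply (is_lim_derive_0 Y (fun t => FY t) (fun t => k * E * (FX (t - tau) * W (t - tau)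
          + X (t - tau) * FW (t - tau)) - dl * FY t - p * (FY t * Z t + Y t * FZ t)) (t0 + tau) ys); auto.
      - intros t Ht. apply (Hsol t ltac:(lra)).
      - apply is_derive_rhs_y.
      - apply bounded_from_shift with (c := tau) in BFX, BFW, BX, BW.
        apply (bounded_from_mono t0 (t0 + tau)) in BY, BZ, BFZ; try lra. prove_bounded. }
    apply (is_lim_ext_loc (fun t => (k * E * X (t - tau) * W (t - tau) - dl * Y t - FY t) / (p * Y t))).
    { exists t0. intros t _. unfold rhs_y. field. split; [apply Rgt_not_eq, HY | lra]. }
    replace zs with ((k * E * xs * vs - dl * ys - 0) / (p * ys)) by (rewrite E3; field; lra).
    apply is_lim_Rdiv; [prove_lim | prove_lim | apply Rgt_not_eq; Rpos].
Qed.

Lemma lyap_attractive :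
  is_lim X p_infty xs /\ is_lim Y p_infty ys /\ is_lim W p_infty vs /\ is_lim Z p_infty zs.
Proof. split; [apply attract_X | split; [apply attract_Y | split; [apply attract_W | apply attract_Z]]]. Qed.

End Trajectory.

End Lyapunov.

Lemma E_Ei (dl tau : R) : exp (- (dl * tau)) * exp (dl * tau) = 1.
Proof. rewrite <- exp_plus. replace (- (dl * tau) + dl * tau) with 0 by ring. apply exp_0. Qed.

(** * Solutions of the delay system *)

Section Model.

Variables s d k dl p N mu q b tau : R.
Hypotheses (Hs : 0 < s) (Hd : 0 < d) (Hk : 0 < k) (Hdl : 0 < dl) (Hp : 0 < p) (HN : 0 < N)
  (Hmu : 0 < mu) (Hq : 0 < q) (Hb : 0 < b) (Htau : 0 < tau).

Local Notation E := (exp (- (dl * tau))).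
Local Notation Ei := (exp (dl * tau)).

Section Solution.

Variables (phi1 phi3 : R -> R) (y0 z0 : R) (x y v z : R -> R).
Hypotheses (Hadm : admissible tau phi1 phi3 y0 z0)
  (Hsol : is_solution s d k dl p N mu q b tau phi1 phi3 y0 z0 x y v z).

Lemma sol_history (th : R) : - tau <= th <= 0 -> 0 <= x th /\ 0 <= v th.
Proof.
  intros Hth. destruct Hsol as (Hin & _). destruct Hadm as (_ & _ & Hphi & _).
  destruct (Hin th Hth) as [-> ->]. auto.
Qed.

Lemma sol_derive (t : R) : 0 < t ->
  is_derive x t (s - d * x t - k * x t * v t) /\
  is_derive y t (k * E * x (t - tau) * v (t - tau) - dl * y t - p * y t * z t) /\
  is_derive v t (N * dl * y t - mu * v t) /\
  is_derive z t (q * y t * z t - b * z t).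
Proof. destruct Hsol as (_ & _ & _ & _ & HD). apply HD. Qed.

Lemma sol_continuous (a : R) : 0 <= a -> forall t,
  continuous (clamp a x) t /\ continuous (clamp a y) t /\
  continuous (clamp a v) t /\ continuous (clamp a z) t.
Proof.
  intros Ha t. destruct Hsol as (_ & _ & _ & Hc & _).
  repeat split; apply (continuous_clamp_clamp _ 0 a Ha); apply continuous_clamp;
    intros u Hu; apply (Hc u Hu).
Qed.

(* On [-tau, 0] the solution is the history, so [clamp (-tau) f] is the sum of the
   (continuous) clamped history and of [clamp 0 f], minus the common value at 0. *)
Lemma continuous_clamp_history (f phi : R -> R) : cont_on_init tau phi ->
  (forall th, - tau <= th <= 0 -> f th = phi th) -> (forall t, continuous (clamp 0 f) t) ->
  forall a t, - tau <= a -> continuous (clamp a f) t.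
Proof.
  intros Hphi Hf Hc a t Ha. apply (continuous_clamp_clamp _ (- tau) a Ha). clear t. intros t.
  apply (continuous_Rext (fun u => phi (Rmax (- tau) (Rmin 0 u)) + clamp 0 f u - phi 0)).
  - intros u. unfold clamp. destruct (Rle_dec u 0).
    + rewrite (Rmin_right 0 u), (Rmax_left 0 u) by lra.
      assert (- tau <= Rmax (- tau) u <= 0) by (split; [apply Rmax_l | apply Rmax_lub; lra]).
      rewrite (Hf 0), (Hf (Rmax (- tau) u)) by lra. ring.
    + rewrite (Rmin_left 0 u), (Rmax_right 0 u), (Rmax_right (- tau) 0), (Rmax_right (- tau) u) by lra. ring.
  - apply continuous_Rminus; [apply continuous_Rplus; auto | apply continuous_Rconst].
Qed.

Lemma sol_continuous_history (a : R) : - tau <= a -> forall t,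
  continuous (clamp a x) t /\ continuous (clamp a v) t.
Proof.
  intros Ha t. destruct Hadm as (C1 & C3 & _). destruct Hsol as (Hin & _).
  split; [apply (continuous_clamp_history x phi1) | apply (continuous_clamp_history v phi3)]; auto;
    try (intros th Hth; apply Hin; auto); intros u; apply (sol_continuous 0 (Rle_refl 0) u).
Qed.

Lemma sol_x_sign (a c : R) : 0 <= a < c -> 0 <= x a -> 0 < x c.
Proof.
  intros Hac Hxa.
  destruct (linear_ode_sign x (fun _ => s) (fun w => d + k * v w) a c (proj2 Hac)) as (_ & _ & H);
    auto; try (intros; lra).
  - intros t. change (continuous (fun w => d + k * clamp a v w) t).
    apply continuous_Rplus, continuous_Rscal; [apply continuous_Rconst | apply (sol_continuous a ltac:(lra) t)].
  - intros t. apply (sol_continuous a ltac:(lra) t).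
  - intros t Ht. destruct (sol_derive t ltac:(lra)) as (D & _). eapply is_derive_val; [exact D | ring].
Qed.

Lemma sol_z_sign (a c : R) : 0 <= a < c -> (0 <= z a -> 0 <= z c) /\ (0 < z a -> 0 < z c).
Proof.
  intros Hac.
  destruct (linear_ode_sign z (fun _ => 0) (fun w => b - q * y w) a c (proj2 Hac)) as (H1 & H2 & _);
    auto; try (intros; lra).
  - intros t. change (continuous (fun w => b - q * clamp a y w) t).
    apply continuous_Rminus, continuous_Rscal; [apply continuous_Rconst | apply (sol_continuous a ltac:(lra) t)].
  - intros t. apply (sol_continuous a ltac:(lra) t).
  - intros t Ht. destruct (sol_derive t ltac:(lra)) as (_ & _ & _ & D). eapply is_derive_val; [exact D | ring].
Qed.

Lemma sol_y_sign (a c : R) : 0 <= a < c ->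
  (forall t, a < t < c -> 0 <= x (t - tau) * v (t - tau)) ->
  (0 <= y a -> 0 <= y c) /\ (0 < y a -> 0 < y c) /\
  ((forall t, a < t < c -> 0 < x (t - tau) * v (t - tau)) -> 0 <= y a -> 0 < y c).
Proof.
  intros Hac Hg. assert (HE := exp_pos (- (dl * tau))).
  destruct (linear_ode_sign y (fun t => k * E * x (t - tau) * v (t - tau)) (fun w => dl + p * z w) a c
    (proj2 Hac)) as (H1 & H2 & H3); auto.
  - intros t. change (continuous (fun w => dl + p * clamp a z w) t).
    apply continuous_Rplus, continuous_Rscal; [apply continuous_Rconst | apply (sol_continuous a ltac:(lra) t)].
  - intros t. apply (sol_continuous a ltac:(lra) t).
  - intros t Ht. destruct (sol_derive t ltac:(lra)) as (_ & D & _). eapply is_derive_val; [exact D | ring].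
  - intros t Ht. specialize (Hg t Ht). rewrite Rmult_assoc. apply Rmult_le_pos; [left; Rpos | auto].
  - split; [exact H1 | split; [exact H2 |]]. intros Hg' Hy. apply H3; auto.
    intros t Ht. specialize (Hg' t Ht). rewrite Rmult_assoc. apply Rmult_lt_0_compat; [Rpos | auto].
Qed.

Lemma sol_v_sign (a c : R) : 0 <= a < c -> (forall t, a < t < c -> 0 <= y t) ->
  (0 <= v a -> 0 <= v c) /\ (0 < v a -> 0 < v c) /\
  ((forall t, a < t < c -> 0 < y t) -> 0 <= v a -> 0 < v c).
Proof.
  intros Hac Hg.
  destruct (linear_ode_sign v (fun t => N * dl * y t) (fun _ => mu) a c (proj2 Hac)) as (H1 & H2 & H3); auto.
  - intros t. apply continuous_Rconst.
  - intros t. apply (sol_continuous a ltac:(lra) t).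
  - intros t Ht. destruct (sol_derive t ltac:(lra)) as (_ & _ & D & _). eapply is_derive_val; [exact D | ring].
  - intros t Ht. specialize (Hg t Ht). apply Rmult_le_pos; [left; Rpos | auto].
  - split; [exact H1 | split; [exact H2 |]]. intros Hg' Hv. apply H3; auto.
    intros t Ht. specialize (Hg' t Ht). Rpos.
Qed.

Lemma sol_x_pos (t : R) : 0 < t -> 0 < x t.
Proof. intros Ht. apply (sol_x_sign 0 t); [lra | apply sol_history; lra]. Qed.

Lemma sol_x_nonneg (t : R) : - tau <= t -> 0 <= x t.
Proof. intros Ht. destruct (Rle_dec t 0). apply sol_history; lra. left; apply sol_x_pos; lra. Qed.

Lemma sol_z_nonneg (t : R) : 0 <= t -> 0 <= z t.
Proof.
  intros Ht. destruct Hsol as (_ & _ & Hz0 & _). destruct Hadm as (_ & _ & _ & _ & Hz0p).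
  destruct Ht as [Ht | <-]; [apply (proj1 (sol_z_sign 0 t ltac:(lra))) |]; rewrite Hz0; auto.
Qed.

(* Method of steps: on [0, (n+1) tau] the source term of y only involves the
   solution on [-tau, n tau]. *)
Lemma sol_yv_nonneg (t : R) : 0 <= t -> 0 <= y t /\ 0 <= v t.
Proof.
  revert t. destruct Hsol as (_ & Hy0 & _). destruct Hadm as (_ & _ & _ & Hy0p & _).
  assert (Q : forall n : nat, forall t, 0 <= t <= INR n * tau -> 0 <= y t /\ 0 <= v t).
  { induction n as [|n IH].
    - intros t Ht. simpl in Ht. replace t with 0 by lra. rewrite Hy0. split; auto. apply sol_history; lra.
    - assert (Yn : forall t, 0 <= t <= INR (S n) * tau -> 0 <= y t).
      { intros t Ht. destruct (proj1 Ht) as [Ht0| <-]; [|rewrite Hy0; auto].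
        assert (Hsrc : forall u, 0 < u < t -> 0 <= x (u - tau) * v (u - tau)).
        { intros u Hu. apply Rmult_le_pos; [apply sol_x_nonneg; lra |].
          destruct (Rle_dec (u - tau) 0); [apply sol_history; lra | apply IH]. rewrite S_INR in Ht. lra. }
        apply (proj1 (sol_y_sign 0 t ltac:(lra) Hsrc)). rewrite Hy0; auto. }
      intros t Ht. split; [apply Yn; auto |].
      destruct (proj1 Ht) as [Ht0| <-]; [|apply sol_history; lra].
      assert (Hsrc : forall u, 0 < u < t -> 0 <= y u) by (intros u Hu; apply Yn; lra).
      apply (proj1 (sol_v_sign 0 t ltac:(lra) Hsrc)). apply sol_history; lra. }
  intros t Ht. destruct (INR_unbounded (t / tau)) as [n Hn]. apply (Q n). split; auto.
  apply Rlt_le. apply (Rmult_lt_reg_r (/ tau)); [Rpos |].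
  replace (INR n * tau * / tau) with (INR n) by (field; lra). unfold Rdiv in Hn. lra.
Qed.

Lemma sol_v_nonneg (t : R) : - tau <= t -> 0 <= v t.
Proof. intros Ht. destruct (Rle_dec t 0). apply sol_history; lra. apply sol_yv_nonneg; lra. Qed.

Lemma sol_y_persist (a t : R) : 0 <= a -> 0 < y a -> a <= t -> 0 < y t.
Proof.
  intros Ha Hya [Ht | <-]; auto.
  assert (Hsrc : forall u, a < u < t -> 0 <= x (u - tau) * v (u - tau))
    by (intros u Hu; apply Rmult_le_pos; [apply sol_x_nonneg | apply sol_v_nonneg]; lra).
  apply (proj1 (proj2 (sol_y_sign a t ltac:(lra) Hsrc))); auto.
Qed.

Lemma sol_v_persist (a t : R) : 0 <= a -> 0 < v a -> a <= t -> 0 < v t.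
Proof.
  intros Ha Hva [Ht | <-]; auto.
  assert (Hsrc : forall u, a < u < t -> 0 <= y u) by (intros u Hu; apply sol_yv_nonneg; lra).
  apply (proj1 (proj2 (sol_v_sign a t ltac:(lra) Hsrc))); auto.
Qed.

Lemma sol_v_pos_of_y (a t : R) : 0 <= a -> 0 < y a -> a < t -> 0 < v t.
Proof.
  intros Ha Hya Ht.
  assert (Hsrc : forall u, a < u < t -> 0 <= y u) by (intros u Hu; apply sol_yv_nonneg; lra).
  apply (proj2 (proj2 (sol_v_sign a t ltac:(lra) Hsrc))); [| apply sol_v_nonneg; lra].
  intros u Hu. apply (sol_y_persist a); lra.
Qed.

Lemma sol_z_persist (t : R) : 0 < z0 -> 0 <= t -> 0 < z t.
Proof.
  intros Hz0 Ht. destruct Hsol as (_ & _ & Hz & _). rewrite <- Hz in Hz0.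
  destruct Ht as [Ht | <-]; auto. apply (proj2 (sol_z_sign 0 t ltac:(lra))); auto.
Qed.

(* If [y0 = 0], continuity of the history gives [x v > 0] near [-tau], hence a
   positive source for y just after 0; if [v(0) > 0], the source is positive on [tau, tau + 1]. *)
Lemma sol_eventually_pos : cond_ii tau phi1 phi3 y0 z0 ->
  exists T, 0 < T /\ forall t, T <= t -> 0 < y t /\ 0 < v t.
Proof.
  intros Hcond. destruct Hsol as (Hin & Hy0 & _). destruct Hadm as (C1 & C3 & _ & Hy0p & _).
  assert (fromy : forall a, 0 <= a -> 0 < y a -> exists T, 0 < T /\ forall t, T <= t -> 0 < y t /\ 0 < v t).
  { intros a Ha Hya. exists (a + 1). split; [lra |]. intros t Ht.
    split; [apply (sol_y_persist a) | apply (sol_v_pos_of_y a)]; auto; lra. }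
  destruct Hcond as [Hc1 | Hc2].
  - destruct (Rlt_dec 0 y0) as [Hy | Hy]; [apply (fromy 0); [lra | rewrite Hy0; auto] |].
    assert (Hpp : 0 < phi1 (- tau) * phi3 (- tau)) by (apply Rnot_lt_le in Hy; unfold cond_ii in Hc1; lra).
    set (P := fun w => clamp (- tau) phi1 (Rmin 0 w) * clamp (- tau) phi3 (Rmin 0 w)).
    assert (HPv : forall u, - tau <= u <= 0 -> P u = phi1 u * phi3 u).
    { intros u Hu. unfold P, clamp. rewrite Rmin_right, Rmax_right by lra. auto. }
    destruct (continuous_eps_delta P (- tau) (continuous_Rmult _ _ _ (C1 _) (C3 _)) (P (- tau) / 2))
      as [del [Hdel Hdel']]; [rewrite HPv; lra |].
    set (e := Rmin del tau / 2).
    assert (He : 0 < e /\ e < del /\ e < tau).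
    { assert (Rmin del tau <= del) by apply Rmin_l. assert (Rmin del tau <= tau) by apply Rmin_r.
      assert (0 < Rmin del tau) by (apply Rmin_case; lra). unfold e; lra. }
    apply (fromy e); [lra |].
    assert (Hsrc : forall u, 0 < u < e -> 0 <= x (u - tau) * v (u - tau))
      by (intros u Hu; apply Rmult_le_pos; [apply sol_x_nonneg | apply sol_v_nonneg]; lra).
    apply (proj2 (proj2 (sol_y_sign 0 e ltac:(lra) Hsrc))); [| rewrite Hy0; lra].
    intros u Hu. destruct (Hin (u - tau) ltac:(lra)) as [-> ->].
    assert (Hx := Hdel' (u - tau) ltac:(rewrite Rabs_right; lra)).
    rewrite !HPv in Hx by lra. apply Rabs_lt_between in Hx. lra.
  - assert (Hv0 : 0 < v 0) by (destruct (Hin 0 ltac:(lra)) as [_ ->]; lra).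
    apply (fromy (tau + 1)); [lra |].
    assert (Hsrc : forall u, tau < u < tau + 1 -> 0 <= x (u - tau) * v (u - tau))
      by (intros u Hu; apply Rmult_le_pos; [apply sol_x_nonneg | apply sol_v_nonneg]; lra).
    apply (proj2 (proj2 (sol_y_sign tau (tau + 1) ltac:(lra) Hsrc))); [| apply sol_yv_nonneg; lra].
    intros u Hu. apply Rmult_lt_0_compat; [apply sol_x_pos | apply (sol_v_persist 0)]; lra.
Qed.

Lemma sol_clamped_state (xs ys vs zs T : R) : 0 <= T ->
  (forall u, T - tau <= u -> 0 < x u /\ volterra_dom vs (v u)) ->
  (forall u, T <= u -> volterra_dom ys (y u) /\ volterra_dom zs (z u)) ->
  lyap_state xs ys vs zs (clamp (T - tau) x) (clamp T y) (clamp (T - tau) v) (clamp T z) /\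
  solves_from s d k dl p N mu q b tau E (clamp (T - tau) x) (clamp T y) (clamp (T - tau) v) (clamp T z) T.
Proof.
  intros HT Hxv Hyz.
  assert (HmT : forall a u, a <= Rmax a u) by (intros; apply Rmax_l).
  split; [constructor |].
  - intros u. apply Hxv, HmT.
  - intros u. apply Hyz, HmT.
  - intros u. apply Hxv, HmT.
  - intros u. apply Hyz, HmT.
  - intros u. apply (sol_continuous_history (T - tau) ltac:(lra) u).
  - intros u. apply (sol_continuous T HT u).
  - intros u. apply (sol_continuous_history (T - tau) ltac:(lra) u).
  - intros u. apply (sol_continuous T HT u).
  - intros t Ht. destruct (sol_derive t ltac:(lra)) as (DX & DY & DV & DZ).
    unfold rhs_x, rhs_y, rhs_v, rhs_z. rewrite !clamp_right by lra.
    split; [|split; [|split]]; apply is_derive_clamp; auto; lra.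
Qed.

Lemma sol_attractive (xs ys vs zs : R) : lyap_equilibrium s d k dl p N mu q b E Ei xs ys vs zs ->
  (exists T, 0 < T /\ forall t, T <= t -> (0 < ys -> 0 < y t) /\ (0 < vs -> 0 < v t) /\ (0 < zs -> 0 < z t)) ->
  is_lim x p_infty xs /\ is_lim y p_infty ys /\ is_lim v p_infty vs /\ is_lim z p_infty zs.
Proof.
  intros Heq [T [HT Hpos]].
  destruct (sol_clamped_state xs ys vs zs (T + tau)) as [Hst Hsolves]; [lra | | |].
  - intros u Hu. split; [apply sol_x_pos; lra |].
    split; [apply sol_v_nonneg; lra | apply Hpos; lra].
  - intros u Hu. destruct (sol_yv_nonneg u ltac:(lra)) as [Hy _].
    split; (split; [auto; apply sol_z_nonneg; lra | apply Hpos; lra]).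
  - assert (HE := exp_pos (- (dl * tau))). assert (HEEi := E_Ei dl tau).
    destruct (lyap_attractive s d k dl p N mu q b tau E Ei Hd Hk Hdl Hp HN Hmu Hq Hb Htau HE HEEi
      xs ys vs zs Heq _ _ _ _ Hst _ Hsolves) as (LX & LY & LV & LZ).
    assert (ext : forall (a : R) (f : R -> R) (l : R), is_lim (clamp a f) p_infty l -> is_lim f p_infty l).
    { intros a f l H. apply (is_lim_ext_loc (clamp a f)); auto. exists a. intros u Hu. apply clamp_right. lra. }
    repeat split; eapply ext; eauto.
Qed.

Lemma sol_state_from_0 (xs ys vs zs : R) : 0 < xs ->
  (forall th, - tau <= th <= 0 -> volterra_dom xs (phi1 th) /\ volterra_dom vs (phi3 th)) ->
  volterra_dom ys y0 -> volterra_dom zs z0 ->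
  lyap_state xs ys vs zs (clamp (0 - tau) x) (clamp 0 y) (clamp (0 - tau) v) (clamp 0 z) /\
  solves_from s d k dl p N mu q b tau E (clamp (0 - tau) x) (clamp 0 y) (clamp (0 - tau) v) (clamp 0 z) 0.
Proof.
  intros Hxs Hhist Hy0d Hz0d. destruct Hsol as (Hin & Hy0 & Hz0 & _).
  assert (Hv0 : 0 < vs -> 0 < v 0).
  { intros Hv. destruct (Hin 0 ltac:(lra)) as [_ ->]. apply (Hhist 0 ltac:(lra)); auto. }
  apply sol_clamped_state; [lra | |].
  - intros u Hu. destruct (Rle_dec u 0) as [Hu0 | Hu0].
    + destruct (Hin u ltac:(lra)) as [-> ->]. destruct (Hhist u ltac:(lra)) as [Hx1 Hv1].
      split; [apply Hx1 | auto]; lra.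
    + split; [apply sol_x_pos; lra |]. split; [apply sol_v_nonneg; lra |].
      intros Hv. apply (sol_v_persist 0); auto; lra.
  - intros u Hu. destruct (sol_yv_nonneg u Hu) as [Hyu _]. split; split; auto.
    + intros Hys. apply (sol_y_persist 0); auto; [lra | rewrite Hy0; apply Hy0d; auto].
    + apply sol_z_nonneg; auto.
    + intros Hzs. apply sol_z_persist; auto. apply Hz0d; auto.
Qed.

(* Near the equilibrium the Lyapunov functional starts below (sum of weights) * r
   and never increases. *)
Lemma sol_lyap_small (xs ys vs zs r : R) : lyap_equilibrium s d k dl p N mu q b E Ei xs ys vs zs ->
  (forall th, - tau <= th <= 0 ->
     (volterra_dom xs (phi1 th) /\ volterra xs (phi1 th) <= r) /\
     (volterra_dom vs (phi3 th) /\ volterra vs (phi3 th) <= r) /\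
     volterra (xs * vs) (phi1 th * phi3 th) <= r) ->
  volterra_dom ys y0 /\ volterra ys y0 <= r -> volterra_dom zs z0 /\ volterra zs z0 <= r ->
  forall t, 0 <= t ->
    let K := 1 + Ei + weight_v dl p N Ei zs + weight_z p q Ei + k * tau in
    (volterra_dom xs (x t) /\ volterra xs (x t) <= K * r) /\
    (volterra_dom ys (y t) /\ Ei * volterra ys (y t) <= K * r) /\
    (volterra_dom vs (v t) /\ weight_v dl p N Ei zs * volterra vs (v t) <= K * r) /\
    (volterra_dom zs (z t) /\ weight_z p q Ei * volterra zs (z t) <= K * r).
Proof.
  intros Heq Hhist [Hy0d Hy0s] [Hz0d Hz0s] t Ht K.
  assert (HE := exp_pos (- (dl * tau))). assert (HEEi := E_Ei dl tau).
  assert (Hxs := eq_xs_pos _ _ _ _ _ _ _ _ _ _ _ _ _ _ _ Heq).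
  destruct (sol_state_from_0 xs ys vs zs Hxs) as [Hst Hsolves]; auto.
  { intros th Hth. destruct (Hhist th Hth) as ([? _] & [? _] & _). auto. }
  assert (HV0 := lyap_le_of_terms_le s d k dl p N mu q b tau E Ei Hk Hdl Hp HN Hq Htau HE HEEi
    xs ys vs zs Heq _ _ _ _ Hst 0 r).
  destruct (lyap_volterra_bounds s d k dl p N mu q b tau E Ei Hd Hk Hdl Hp HN Hmu Hq Hb Htau HE HEEi
    xs ys vs zs Heq _ _ _ _ Hst _ Hsolves t Ht) as (B1 & B2 & B3 & B4).
  destruct Hst as [HX HY HW HZ _ _ _ _].
  destruct Hsol as (Hin & Hy0 & Hz0 & _).
  assert (HI : forall u, 0 - tau <= u <= 0 -> lyap_integrand xs vs (clamp (0 - tau) x) (clamp (0 - tau) v) u <= r).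
  { intros u Hu. unfold lyap_integrand. rewrite !clamp_right by lra.
    destruct (Hin u ltac:(lra)) as [-> ->]. apply Hhist. lra. }
  destruct (Hin 0 ltac:(lra)) as [Ex0 Ev0]. destruct (Hhist 0 ltac:(lra)) as ([_ H1] & [_ H3] & _).
  rewrite <- Ex0, <- (clamp_right (0 - tau) x 0) in H1 by lra.
  rewrite <- Ev0, <- (clamp_right (0 - tau) v 0) in H3 by lra.
  rewrite <- Hy0, <- (clamp_right 0 y 0) in Hy0s by lra.
  rewrite <- Hz0, <- (clamp_right 0 z 0) in Hz0s by lra.
  specialize (HV0 H1 Hy0s H3 Hz0s HI). fold K in HV0.
  specialize (HX t). specialize (HY t). specialize (HW t). specialize (HZ t).
  rewrite !clamp_right in B1, B2, B3, B4, HX, HY, HW, HZ by lra.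
  refine (conj (conj _ _) (conj (conj _ _) (conj (conj _ _) (conj _ _)))); auto; try lra.
  split; [lra | auto].
Qed.

End Solution.

Lemma lyap_stable (xs ys vs zs : R) : lyap_equilibrium s d k dl p N mu q b E Ei xs ys vs zs ->
  forall eps, 0 < eps -> exists eta, 0 < eta /\
    forall phi1 phi3 y0 z0 x y v z,
      admissible tau phi1 phi3 y0 z0 ->
      (forall th, - tau <= th <= 0 -> Rabs (phi1 th - xs) < eta /\ Rabs (phi3 th - vs) < eta) ->
      Rabs (y0 - ys) < eta -> Rabs (z0 - zs) < eta ->
      is_solution s d k dl p N mu q b tau phi1 phi3 y0 z0 x y v z ->
      forall t, 0 <= t ->
        Rabs (x t - xs) < eps /\ Rabs (y t - ys) < eps /\ Rabs (v t - vs) < eps /\ Rabs (z t - zs) < eps.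
Proof.
  intros Heq eps Heps.
  assert (HE := exp_pos (- (dl * tau))). assert (HEEi := E_Ei dl tau).
  assert (HEi := Ei_pos E Ei HE HEEi).
  assert (Heq' := Heq). destruct Heq' as [Hxs Hys Hvs Hzs _ _ _ _ _ _].
  set (wv := weight_v dl p N Ei zs). set (wz := weight_z p q Ei).
  assert (Hwv : 0 < wv) by apply (weight_v_pos dl p N E Ei Hdl Hp HN HE HEEi zs Hzs).
  assert (Hwz : 0 < wz) by apply (weight_z_pos p q E Ei Hp Hq HE HEEi).
  (* A level R of the Lyapunov functional below which every component is eps-close... *)
  destruct (volterra_weighted_close xs 1 eps) as [Rx [HRx Cx]]; [lra | lra | auto |].
  destruct (volterra_weighted_close ys Ei eps) as [Ry [HRy Cy]]; auto.
  destruct (volterra_weighted_close vs wv eps) as [Rv [HRv Cv]]; auto.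
  destruct (volterra_weighted_close zs wz eps) as [Rz [HRz Cz]]; auto.
  set (R := Rmin (Rmin Rx Ry) (Rmin Rv Rz)).
  assert (HRs : R <= Rx /\ R <= Ry /\ R <= Rv /\ R <= Rz) by (unfold R; repeat split; Rmin_le).
  set (K := 1 + Ei + wv + wz + k * tau).
  assert (HR : 0 < R) by (unfold R; repeat apply Rmin_pos; auto).
  assert (HK : 0 < K) by (unfold K; assert (0 < k * tau) by Rpos; lra).
  assert (HrK : 0 < R / K) by Rpos.
  (* ... and an eta making every initial term of the functional at most R / K. *)
  destruct (volterra_small_near_pair xs vs (R / K)) as [e1 [He1 Nxv]]; [lra | lra | auto |].
  destruct (volterra_small_near ys (R / K)) as [e2 [He2 Ny]]; [lra | auto |].
  destruct (volterra_small_near zs (R / K)) as [e3 [He3 Nz]]; [lra | auto |].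
  exists (Rmin e1 (Rmin e2 e3)). split; [repeat apply Rmin_pos; auto |].
  assert (He : Rmin e1 (Rmin e2 e3) <= e1 /\ Rmin e1 (Rmin e2 e3) <= e2 /\ Rmin e1 (Rmin e2 e3) <= e3)
    by (repeat split; Rmin_le).
  intros phi1 phi3 y0 z0 x y v z Hadm Hnear Hy0n Hz0n Hsol t Ht.
  assert (Hadm' := Hadm). destruct Hadm' as (_ & _ & Hphi & Hy0p & Hz0p).
  assert (Hhist : forall th, - tau <= th <= 0 ->
     (volterra_dom xs (phi1 th) /\ volterra xs (phi1 th) <= R / K) /\
     (volterra_dom vs (phi3 th) /\ volterra vs (phi3 th) <= R / K) /\
     volterra (xs * vs) (phi1 th * phi3 th) <= R / K).
  { intros th Hth. destruct (Hphi th Hth). destruct (Hnear th Hth). apply Nxv; auto; lra. }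
  destruct (sol_lyap_small phi1 phi3 y0 z0 x y v z Hadm Hsol xs ys vs zs (R / K) Heq Hhist
    (Ny y0 Hy0p ltac:(lra)) (Nz z0 Hz0p ltac:(lra)) t Ht)
    as ([Dx Bx] & [Dy By] & [Dv Bv] & [Dz Bz]). fold wv wz K in Bx, By, Bv, Bz.
  replace (K * (R / K)) with R in Bx, By, Bv, Bz by (field; lra).
  split; [apply Cx | split; [apply Cy | split; [apply Cv | apply Cz]]]; auto; lra.
Qed.

Lemma lyap_GAS (xs ys vs zs : R) (P : (R -> R) -> (R -> R) -> R -> R -> Prop) :
  lyap_equilibrium s d k dl p N mu q b E Ei xs ys vs zs ->
  (forall phi1 phi3 y0 z0 x y v z, admissible tau phi1 phi3 y0 z0 -> P phi1 phi3 y0 z0 ->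
     is_solution s d k dl p N mu q b tau phi1 phi3 y0 z0 x y v z ->
     exists T, 0 < T /\ forall t, T <= t ->
       (0 < ys -> 0 < y t) /\ (0 < vs -> 0 < v t) /\ (0 < zs -> 0 < z t)) ->
  GAS_wrt s d k dl p N mu q b tau P xs ys vs zs.
Proof.
  intros Heq Hev. split.
  - intros eps Heps. destruct (lyap_stable xs ys vs zs Heq eps Heps) as [eta [He H]].
    exists eta. split; auto. intros phi1 phi3 y0 z0 x y v z HA _. eapply H; eauto.
  - intros phi1 phi3 y0 z0 x y v z HA HP HS.
    apply (sol_attractive phi1 phi3 y0 z0 x y v z HA HS); auto. eapply Hev; eauto.
Qed.

(** * The three equilibria *)

Lemma le_of_div_le_1 (a c : R) : 0 < c -> a / c <= 1 -> a <= c.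
Proof. intros Hc H. apply (Rmult_le_compat_r c) in H; [|lra]. replace (a / c * c) with a in H by (field; lra). lra. Qed.

Lemma lt_of_1_lt_div (a c : R) : 0 < c -> 1 < a / c -> c < a.
Proof. intros Hc H. apply (Rmult_lt_compat_r c) in H; [|lra]. replace (a / c * c) with a in H by (field; lra). lra. Qed.

Lemma equilibrium_free : R0bar s d k dl N mu tau <= 1 ->
  lyap_equilibrium s d k dl p N mu q b E Ei (s / d) 0 0 0.
Proof.
  unfold R0bar. intros HR. assert (HE := exp_pos (- (dl * tau))). assert (HEEi := E_Ei dl tau).
  assert (HEi : Ei = / E) by (field_simplify_eq; lra).
  replace (s / (d * (mu / (k * E * N)))) with ((s * k * E * N) / (d * mu)) in HR by (field; repeat split; lra).
  apply le_of_div_le_1 in HR; [|Rpos].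
  constructor; try lra; [Rpos | field; lra |].
  replace (k * (s / d) * (N * dl)) with ((dl * / E / d) * (s * k * E * N)) by (field; lra).
  replace (Ei * (dl + p * 0) * mu) with ((dl * / E / d) * (d * mu)) by (rewrite HEi; field; lra).
  apply Rmult_le_compat_l; auto. left; Rpos.
Qed.

Lemma equilibrium_infected :
  R1bar s d k dl N mu q b tau <= 1 < R0bar s d k dl N mu tau ->
  lyap_equilibrium s d k dl p N mu q b E Ei (mu * Ei / (k * N))
    (E / dl * (s - d * mu * Ei / (k * N))) (N * E / mu * (s - d * mu * Ei / (k * N))) 0.
Proof.
  unfold R0bar, R1bar. intros [HR1 HR0]. assert (HE := exp_pos (- (dl * tau))). assert (HEEi := E_Ei dl tau).
  assert (HEi : Ei = / E) by (field_simplify_eq; lra). rewrite HEi in *.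
  apply lt_of_1_lt_div in HR0; [|Rpos].
  apply le_of_div_le_1 in HR1; [| assert (0 < / E * dl * (b / q)) by Rpos; assert (0 < d * (mu / (k * E * N))) by Rpos; lra].
  set (S := s - d * mu * / E / (k * N)).
  assert (HSe : d * mu * / E / (k * N) = d * (mu / (k * E * N))) by (field; repeat split; lra).
  assert (HS : 0 < S) by (unfold S; lra).
  assert (HS2 : S <= / E * dl * (b / q)) by (unfold S; lra).
  constructor; try lra.
  - Rpos.
  - left. Rpos.
  - left. Rpos.
  - unfold S. field. repeat split; lra.
  - field. repeat split; lra.
  - field. repeat split; lra.
  - right. field. repeat split; lra.
  - replace (q * (E / dl * S)) with ((q * E / dl) * S) by (field; lra).
    apply Rle_trans with ((q * E / dl) * (/ E * dl * (b / q))).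
    + apply Rmult_le_compat_l; auto. left. Rpos.
    + right. field. repeat split; lra.
Qed.

Lemma equilibrium_immune : 1 < R1bar s d k dl N mu q b tau ->
  lyap_equilibrium s d k dl p N mu q b E Ei (x2bar s d k dl N mu q b) (b / q) (N * dl * b / (mu * q))
    (dl / p * (k * E * N * x2bar s d k dl N mu q b / mu - 1)).
Proof.
  unfold R1bar, x2bar. intros HR1. assert (HE := exp_pos (- (dl * tau))). assert (HEEi := E_Ei dl tau).
  assert (HEi : Ei = / E) by (field_simplify_eq; lra). rewrite HEi in *.
  apply lt_of_1_lt_div in HR1; [| assert (0 < / E * dl * (b / q)) by Rpos; assert (0 < d * (mu / (k * E * N))) by Rpos; lra].
  set (D := d + k * N * dl * b / (mu * q)).
  assert (HD : 0 < D) by (unfold D; assert (0 < k * N * dl * b / (mu * q)) by Rpos; lra).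
  assert (Hz : 0 < k * E * N * (s / D) / mu - 1).
  { assert (HmD : k * E * N * (d * (mu / (k * E * N)) + / E * dl * (b / q)) = mu * D)
      by (unfold D; field; repeat split; lra).
    assert (mu * D < k * E * N * s) by (rewrite <- HmD; apply Rmult_lt_compat_l; [Rpos | auto]).
    replace (k * E * N * (s / D) / mu) with ((k * E * N * s) / (mu * D)) by (field; repeat split; lra).
    assert (1 < (k * E * N * s) / (mu * D)); [|lra].
    apply (Rmult_lt_reg_r (mu * D)); [Rpos |].
    replace (k * E * N * s / (mu * D) * (mu * D)) with (k * E * N * s) by (field; repeat split; lra). lra. }
  constructor; try lra.
  - Rpos.
  - left. Rpos.
  - left. Rpos.
  - left. apply Rmult_lt_0_compat; [Rpos | auto].
  - assert (ED : d + k * N * dl * b / (mu * q) = D) by reflexivity.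
    replace (d * (s / D) + k * (s / D) * (N * dl * b / (mu * q)))
      with (s / D * (d + k * N * dl * b / (mu * q))) by (field; repeat split; lra).
    rewrite ED. field. lra.
  - field. repeat split; lra.
  - field. repeat split; lra.
  - right. field. repeat split; lra.
  - right. field. lra.
  - replace (q * (b / q) - b) with 0 by (field; lra). ring.
Qed.

Lemma GAS_infection_free : R0bar s d k dl N mu tau <= 1 ->
  GAS_wrt s d k dl p N mu q b tau (fun _ _ _ _ => True) (s / d) 0 0 0.
Proof.
  intros HR. apply lyap_GAS; [apply equilibrium_free; auto |].
  intros. exists 1. split; [lra |]. intros; lra.
Qed.

Lemma GAS_infected : R1bar s d k dl N mu q b tau <= 1 < R0bar s d k dl N mu tau ->
  GAS_wrt s d k dl p N mu q b tau (cond_ii tau)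
    (mu * Ei / (k * N)) (E / dl * (s - d * mu * Ei / (k * N)))
    (N * E / mu * (s - d * mu * Ei / (k * N))) 0.
Proof.
  intros HR. apply lyap_GAS; [apply equilibrium_infected; auto |].
  intros phi1 phi3 y0 z0 x y v z HA Hc HS.
  destruct (sol_eventually_pos phi1 phi3 y0 z0 x y v z HA HS Hc) as [T [HT HTp]].
  exists T. split; auto. intros t Ht. destruct (HTp t Ht). repeat split; auto; lra.
Qed.

Lemma GAS_immune : 1 < R1bar s d k dl N mu q b tau ->
  GAS_wrt s d k dl p N mu q b tau (cond_iii tau)
    (x2bar s d k dl N mu q b) (b / q) (N * dl * b / (mu * q))
    (dl / p * (k * E * N * x2bar s d k dl N mu q b / mu - 1)).
Proof.
  intros HR. apply lyap_GAS; [apply equilibrium_immune; auto |].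
  intros phi1 phi3 y0 z0 x y v z HA [Hz0 Hc] HS.
  destruct (sol_eventually_pos phi1 phi3 y0 z0 x y v z HA HS Hc) as [T [HT HTp]].
  exists T. split; auto. intros t Ht. destruct (HTp t Ht).
  repeat split; auto. intros _. apply (sol_z_persist phi1 phi3 y0 z0 x y v z HS); lra.
Qed.

End Model.

Theorem theorem4p1 (s d k dl p N mu q b tau : R) :
  0 < s -> 0 < d -> 0 < k -> 0 < dl -> 0 < p -> 0 < N -> 0 < mu -> 0 < q -> 0 < b ->
  0 < tau ->
  (R0bar s d k dl N mu tau <= 1 ->
     GAS_wrt s d k dl p N mu q b tau (fun _ _ _ _ => True) (s / d) 0 0 0) /\
  (R1bar s d k dl N mu q b tau <= 1 < R0bar s d k dl N mu tau ->
     GAS_wrt s d k dl p N mu q b tau (cond_ii tau)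
       (mu * exp (dl * tau) / (k * N))
       (exp (- (dl * tau)) / dl * (s - d * mu * exp (dl * tau) / (k * N)))
       (N * exp (- (dl * tau)) / mu * (s - d * mu * exp (dl * tau) / (k * N)))
       0) /\
  (1 < R1bar s d k dl N mu q b tau ->
     GAS_wrt s d k dl p N mu q b tau (cond_iii tau)
       (x2bar s d k dl N mu q b)
       (b / q)
       (N * dl * b / (mu * q))
       (dl / p * (k * exp (- (dl * tau)) * N * x2bar s d k dl N mu q b / mu - 1))).
Proof.
  intros Hs Hd Hk Hdl Hp HN Hmu Hq Hb Htau.
  split; [|split]; intros HR.
  - apply GAS_infection_free; auto.
  - apply GAS_infected; auto.
  - apply GAS_immune; auto.
Qed.
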